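(* Under the assumptions and notation of the context, there exist a neighborhood $\mathcal U$ of $(0,0)$ and $C>0$ such that on $\mathcal U\cap\{t>0\}$ the entries of $\mathcal A=(\tilde a_{ij})$ and of $\partial_x\mathcal A$ satisfy (with $|O(g)|\le C g$ entrywise) \[ \mathcal A=\begin{bmatrix}O(\sqrt a)&O(1)&O(\sqrt a)\\O(a)&O(\sqrt a)&O(1)\\O(a^{3/2})&O(a)&O(a^{5/2})\end{bmatrix},\qquad \partial_x\mathcal A=\begin{bmatrix}O(1)&O(1/\sqrt a)&O(1)\\O(\sqrt a)&O(1)&O(1/\sqrt a)\\O(a)&O(\sqrt a)&O(\sqrt a)\end{bmatrix}. \]
   Context: Let $W\subset\mathbb R$ be an open interval containing $0$, $c,T>0$, and let $a(t,x),b(t,x)$ be real-valued $C^\infty$ functions on $(-c,T)\times W$ with bounded derivatives of all orders. Assume $\Delta:=4a^3-27b^2\ge0$ on $[0,T)\times W$, $a(0,0)=0$, and $a>0$ on $(0,T)\times W$. Let $S=\begin{bmatrix}3&0&-a\\0&2a&3b\\-a&3b&a^2\end{bmatrix}$, $A=\begin{bmatrix}0&a&b\\1&0&0\\0&1&0\end{bmatrix}$, and let $\lambda_1<\lambda_2<\lambda_3$ be the eigenvalues of $S$ on $\mathcal U\cap\{t>0\}$ for a small neighborhood $\mathcal U$ of $(0,0)$. Define vectors $\ell_j=(\ell_{1j},\ell_{2j},\ell_{3j})^t$ by $\ell_1=\big(a(2a-\lambda_1),\ 3b(\lambda_1-3),\ (\lambda_1-3)(\lambda_1-2a)\big)^t$,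 $\ell_2=\big(-3ab,\ (\lambda_2-3)(\lambda_2-a^2)-a^2,\ 3b(\lambda_2-3)\big)^t$, $\ell_3=\big((\lambda_3-2a)(\lambda_3-a^2)-9b^2,\ -3ab,\ -a(\lambda_3-2a)\big)^t$ (eigenvectors of $S$ for $\lambda_1,\lambda_2,\lambda_3$), let $\mathbf t_j=\ell_j/|\ell_j|$, and let $T=(\mathbf t_1,\mathbf t_2,\mathbf t_3)$, an orthogonal matrix with $T^{-1}ST=\mathrm{diag}(\lambda_1,\lambda_2,\lambda_3)$. Set $\mathcal A=T^{-1}AT$. *)

From Stdlib Require Import Reals.
From Coquelicot Require Import Coquelicot.
Open Scope R_scope.

(* 3x3 matrices and 3-vectors, indexed by 0,1,2 (paper's indices 1,2,3). *)
Definition Mat := nat -> nat -> R.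
Definition Vec := nat -> R.

Definition mk3 (m00 m01 m02 m10 m11 m12 m20 m21 m22 : R) : Mat :=
  fun i j => match i, j with
  | 0%nat, 0%nat => m00 | 0%nat, 1%nat => m01 | 0%nat, 2%nat => m02
  | 1%nat, 0%nat => m10 | 1%nat, 1%nat => m11 | 1%nat, 2%nat => m12
  | 2%nat, 0%nat => m20 | 2%nat, 1%nat => m21 | 2%nat, 2%nat => m22
  | _, _ => 0 end.

Definition mkv (v0 v1 v2 : R) : Vec :=
  fun i => match i with 0%nat => v0 | 1%nat => v1 | 2%nat => v2 | _ => 0 end.

Definition matS (a b : R) : Mat := mk3 3 0 (-a) 0 (2*a) (3*b) (-a) (3*b) (a^2).
Definition matA (a b : R) : Mat := mk3 0 a b 1 0 0 0 1 0.

Definition mulmv (M : Mat) (v : Vec) : Vec :=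
  fun i => M i 0%nat * v 0%nat + M i 1%nat * v 1%nat + M i 2%nat * v 2%nat.
Definition mulmm (M N : Mat) : Mat :=
  fun i j => M i 0%nat * N 0%nat j + M i 1%nat * N 1%nat j + M i 2%nat * N 2%nat j.

Definition is_eigenvalue (M : Mat) (lam : R) : Prop :=
  exists v : Vec, (v 0%nat <> 0 \/ v 1%nat <> 0 \/ v 2%nat <> 0) /\
    forall i, (i < 3)%nat -> mulmv M v i = lam * v i.

Definition det3 (M : Mat) : R :=
  M 0%nat 0%nat * (M 1%nat 1%nat * M 2%nat 2%nat - M 1%nat 2%nat * M 2%nat 1%nat)
  - M 0%nat 1%nat * (M 1%nat 0%nat * M 2%nat 2%nat - M 1%nat 2%nat * M 2%nat 0%nat)
  + M 0%nat 2%nat * (M 1%nat 0%nat * M 2%nat 1%nat - M 1%nat 1%nat * M 2%nat 0%nat).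
(* cofactor C_{ij} of a 3x3 matrix (cyclic formula) *)
Definition cof3 (M : Mat) (i j : nat) : R :=
  M ((i+1) mod 3)%nat ((j+1) mod 3)%nat * M ((i+2) mod 3)%nat ((j+2) mod 3)%nat
  - M ((i+1) mod 3)%nat ((j+2) mod 3)%nat * M ((i+2) mod 3)%nat ((j+1) mod 3)%nat.
Definition inv3 (M : Mat) : Mat := fun i j => cof3 M j i / det3 M.

(* the eigenvectors l_1, l_2, l_3 of the paper *)
Definition ell1 (a b l : R) : Vec :=
  mkv (a * (2*a - l)) (3*b*(l - 3)) ((l - 3) * (l - 2*a)).
Definition ell2 (a b l : R) : Vec :=
  mkv (-(3*a*b)) ((l - 3) * (l - a^2) - a^2) (3*b*(l - 3)).
Definition ell3 (a b l : R) : Vec :=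
  mkv ((l - 2*a) * (l - a^2) - 9*b^2) (-(3*a*b)) (-(a*(l - 2*a))).

Definition vnorm (v : Vec) : R := sqrt (v 0%nat ^ 2 + v 1%nat ^ 2 + v 2%nat ^ 2).
Definition normalize (v : Vec) : Vec := fun i => v i / vnorm v.

Definition matT (a b l1 l2 l3 : R) : Mat :=
  fun i j => match j with
  | 0%nat => normalize (ell1 a b l1) i
  | 1%nat => normalize (ell2 a b l2) i
  | 2%nat => normalize (ell3 a b l3) i
  | _ => 0 end.

Definition calA (a b l1 l2 l3 : R) : Mat :=
  let T := matT a b l1 l2 l3 in mulmm (inv3 T) (mulmm (matA a b) T).

(* f is C^infinity with bounded partial derivatives of all orders on the open
   set D: F i j is the partial derivative d_t^i d_x^j f. *)
Definition smooth_bdd (D : R -> R -> Prop) (f : R -> R -> R) : Prop :=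
  exists F : nat -> nat -> R -> R -> R,
    (forall t x, D t x -> F 0%nat 0%nat t x = f t x) /\
    (forall i j t x, D t x ->
       is_derive (fun s => F i j s x) t (F (S i) j t x) /\
       is_derive (fun y => F i j t y) x (F i (S j) t x)) /\
    (forall i j, exists M, forall t x, D t x -> Rabs (F i j t x) <= M).

(* gauge functions for the O(.) bounds on calA and d_x calA, as functions of a *)
Definition gaugeA (s : R) : Mat :=
  mk3 (sqrt s) 1 (sqrt s)
      s (sqrt s) 1
      (s * sqrt s) s (s^2 * sqrt s).
Definition gaugedA (s : R) : Mat :=
  mk3 1 (/ sqrt s) 1
      (sqrt s) 1 (/ sqrt s)
      s (sqrt s) (sqrt s).

From Stdlib Require Import Reals Lra Lia Psatz.
From Coquelicot Require Import Coquelicot.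
Open Scope R_scope.

(* The eigenvalues of S are the roots of its characteristic cubic pc, and each
      ell_j is an eigenvector for every root.  Eigenvectors of the symmetric S for distinct
      eigenvalues are orthogonal, so T is orthogonal, T^{-1} = T^t, and calA = T^t A T has
      explicit polynomial entries in a, b and the entries of T (calA_eq).
   2. Localization.  For 0 < a <= 1/100 and 4a^3 >= 27b^2, pc has exactly one root in each
      of [0, a/2), (a, 3a), (2, 4); this gives three distinct eigenvalues and lower bounds on
      |ell_j|.
   3. One-variable calculus.  Glaeser's inequality |a_x| <= C sqrt a for a >= 0, the bound
      |b_x| <= C a when b^2 <= a^3, and implicit differentiation of a simple root of a cubic;
      together they give |d_x lambda_j| <= C sqrt a.
   4. Scaled orders.  With s = sqrt a, a family of functions is "of order k" if it is
      O(s^k) and its x-derivative is O(s^(k-1)); orders add under products and survive sums,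
      quotients and square roots.  Since a, b, lambda_1, lambda_2, lambda_3 have orders
      2, 3, 2, 2, 0, every entry of T and then of calA gets an explicit order, which is
      exactly the exponent of the corresponding gauge.
   The theorem follows by taking a common constant for the nine entries. *)

Lemma det3_mulmv (M : Mat) (v : Vec) (i : nat) : (i < 3)%nat ->
  det3 M * v i = cof3 M 0 i * mulmv M v 0%nat + cof3 M 1 i * mulmv M v 1%nat + cof3 M 2 i * mulmv M v 2%nat.
Proof.
  intros Hi; destruct i as [|[|[|i]]]; try lia; unfold cof3, det3, mulmv; simpl; ring.
Qed.

Lemma det3_kernel (M : Mat) (v : Vec) :
  (v 0%nat <> 0 \/ v 1%nat <> 0 \/ v 2%nat <> 0) ->
  (forall i, (i < 3)%nat -> mulmv M v i = 0) -> det3 M = 0.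
Proof.
  intros Hv HMv.
  assert (Hdet : forall i, (i < 3)%nat -> det3 M * v i = 0).
  { intros i Hi. rewrite det3_mulmv, !HMv by lia. ring. }
  destruct Hv as [H|[H|H]]; [pose proof (Hdet 0%nat) as E | pose proof (Hdet 1%nat) as E | pose proof (Hdet 2%nat) as E];
    destruct (Rmult_integral _ _ (E ltac:(lia))); tauto.
Qed.

(* The characteristic polynomial of S, normalised to be monic: pc a b l = det (l I - S). *)
Definition pc (a b l : R) : R :=
  l^3 - (3+2*a+a^2)*l^2 + (6*a+2*a^2+2*a^3-9*b^2)*l - (4*a^3-27*b^2).

Lemma eig_root a b l : is_eigenvalue (matS a b) l -> pc a b l = 0.
Proof.
  intros [v [Hv He]].
  set (M := mk3 (3 - l) 0 (-a) 0 (2*a - l) (3*b) (-a) (3*b) (a^2 - l)).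
  assert (HMv : forall i, (i < 3)%nat -> mulmv M v i = 0).
  { intros i Hi. specialize (He i Hi). unfold mulmv, matS, mk3 in He. unfold M, mulmv, mk3.
    destruct i as [|[|[|i]]]; try lia; simpl in *; lra. }
  pose proof (det3_kernel M v Hv HMv) as D.
  unfold det3, M, mk3 in D; simpl in D. unfold pc. lra.
Qed.

Lemma ell1_eig a b l k : pc a b l = 0 -> mulmv (matS a b) (ell1 a b l) k = l * ell1 a b l k.
Proof.
  intros H. unfold mulmv, matS, mk3, ell1, mkv.
  destruct k as [|[|[|k]]]; simpl; try ring. unfold pc in H. nra.
Qed.
Lemma ell2_eig a b l k : pc a b l = 0 -> mulmv (matS a b) (ell2 a b l) k = l * ell2 a b l k.
Proof.
  intros H. unfold mulmv, matS, mk3, ell2, mkv.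
  destruct k as [|[|[|k]]]; simpl; try ring; unfold pc in H; nra.
Qed.
Lemma ell3_eig a b l k : pc a b l = 0 -> mulmv (matS a b) (ell3 a b l) k = l * ell3 a b l k.
Proof.
  intros H. unfold mulmv, matS, mk3, ell3, mkv.
  destruct k as [|[|[|k]]]; simpl; try ring; unfold pc in H; nra.
Qed.

Definition dot (u v : Vec) : R := u 0%nat * v 0%nat + u 1%nat * v 1%nat + u 2%nat * v 2%nat.
Definition sq3 (v : Vec) : R := dot v v.

Lemma eig_orth a b (u v : Vec) li lj :
  (forall k, mulmv (matS a b) u k = li * u k) ->
  (forall k, mulmv (matS a b) v k = lj * v k) -> li <> lj -> dot u v = 0.
Proof.
  intros Hu Hv Hne.
  assert (E : (lj - li) * dot u v =
    (mulmv (matS a b) u 0%nat - li * u 0%nat) * v 0%nat + (mulmv (matS a b) u 1%nat - li * u 1%nat) * v 1%nat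
    + (mulmv (matS a b) u 2%nat - li * u 2%nat) * v 2%nat
    - ((mulmv (matS a b) v 0%nat - lj * v 0%nat) * u 0%nat + (mulmv (matS a b) v 1%nat - lj * v 1%nat) * u 1%nat
    + (mulmv (matS a b) v 2%nat - lj * v 2%nat) * u 2%nat)).
  { unfold dot, mulmv, matS, mk3; simpl; ring. }
  rewrite !Hu, !Hv in E.
  destruct (Rmult_integral (lj - li) (dot u v)) as [Z|Z]; [rewrite E; ring | lra | exact Z].
Qed.

Definition gram (T : Mat) (i j : nat) : R :=
  T 0%nat i * T 0%nat j + T 1%nat i * T 1%nat j + T 2%nat i * T 2%nat j.
Definition idm : Mat := mk3 1 0 0 0 1 0 0 0 1.

Lemma det3_transpose_gram (T : Mat) i j : (i < 3)%nat -> (j < 3)%nat ->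
  det3 T * T j i = gram T i 0 * cof3 T j 0%nat + gram T i 1 * cof3 T j 1%nat + gram T i 2 * cof3 T j 2%nat.
Proof.
  intros Hi Hj. destruct i as [|[|[|i]]]; try lia; destruct j as [|[|[|j]]]; try lia;
    unfold det3, gram, cof3; simpl; ring.
Qed.

Lemma det3_sq_gram (T : Mat) : det3 T * det3 T = det3 (gram T).
Proof. unfold det3, gram; simpl; ring. Qed.

Lemma inv3_orthonormal (T : Mat) :
  (forall i j, (i < 3)%nat -> (j < 3)%nat -> gram T i j = idm i j) ->
  forall i j, (i < 3)%nat -> (j < 3)%nat -> inv3 T i j = T j i.
Proof.
  intros HG i j Hi Hj.
  assert (Hd : det3 T * det3 T = 1).
  { rewrite det3_sq_gram. unfold det3. rewrite !HG by lia. unfold idm, mk3; simpl; ring. }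
  assert (Hc : cof3 T j i = det3 T * T j i).
  { rewrite det3_transpose_gram, !HG by lia.
    destruct i as [|[|[|i]]]; try lia; unfold idm, mk3; simpl; ring. }
  unfold inv3. rewrite Hc. field. intro Z. rewrite Z in Hd. lra.
Qed.

Lemma dot_normalize (u v : Vec) : 0 < sq3 u -> 0 < sq3 v ->
  dot (normalize u) (normalize v) = dot u v / (vnorm u * vnorm v).
Proof.
  intros Hu Hv. unfold sq3, dot in *. unfold normalize, dot, vnorm.
  pose proof (sqrt_lt_R0 _ Hu). pose proof (sqrt_lt_R0 _ Hv).
  simpl in *. rewrite !Rmult_1_r. field. split; lra.
Qed.

Lemma dot_normalize_self (u : Vec) : 0 < sq3 u -> dot (normalize u) (normalize u) = 1.
Proof.
  intros Hu. rewrite dot_normalize by auto. unfold vnorm.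
  replace (u 0%nat ^ 2 + u 1%nat ^ 2 + u 2%nat ^ 2) with (sq3 u) by (unfold sq3, dot; ring).
  rewrite sqrt_sqrt by lra. unfold sq3. field. unfold sq3 in Hu. lra.
Qed.

Definition eigvec (a b l1 l2 l3 : R) (j : nat) : Vec :=
  match j with 0%nat => ell1 a b l1 | 1%nat => ell2 a b l2 | _ => ell3 a b l3 end.

Lemma matT_eigvec a b l1 l2 l3 i j : (j < 3)%nat ->
  matT a b l1 l2 l3 i j = normalize (eigvec a b l1 l2 l3 j) i.
Proof. intros Hj. destruct j as [|[|[|j]]]; try lia; reflexivity. Qed.

Lemma eigvec_orth a b l1 l2 l3 j k :
  pc a b l1 = 0 -> pc a b l2 = 0 -> pc a b l3 = 0 -> l1 < l2 < l3 ->
  (j < 3)%nat -> (k < 3)%nat -> j <> k ->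
  dot (eigvec a b l1 l2 l3 j) (eigvec a b l1 l2 l3 k) = 0.
Proof.
  intros p1 p2 p3 Hl Hj Hk Hjk.
  assert (Hsym : forall u v, dot u v = dot v u) by (intros; unfold dot; ring).
  assert (O12 : dot (ell1 a b l1) (ell2 a b l2) = 0)
    by (apply (eig_orth a b _ _ l1 l2); [intro; apply ell1_eig | intro; apply ell2_eig | lra]; auto).
  assert (O13 : dot (ell1 a b l1) (ell3 a b l3) = 0)
    by (apply (eig_orth a b _ _ l1 l3); [intro; apply ell1_eig | intro; apply ell3_eig | lra]; auto).
  assert (O23 : dot (ell2 a b l2) (ell3 a b l3) = 0)
    by (apply (eig_orth a b _ _ l2 l3); [intro; apply ell2_eig | intro; apply ell3_eig | lra]; auto).
  destruct j as [|[|[|j]]]; try lia; destruct k as [|[|[|k]]]; try lia; simpl;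
    first [assumption | rewrite Hsym; assumption].
Qed.

(* When T is orthogonal, T^{-1} A T = T^t A T has polynomial entries. *)
Definition calA_entries (a b : R) (T : Mat) (i j : nat) : R :=
  T 0%nat i * (a * T 1%nat j + b * T 2%nat j) + T 1%nat i * T 0%nat j + T 2%nat i * T 1%nat j.

Lemma calA_eq a b l1 l2 l3 :
  pc a b l1 = 0 -> pc a b l2 = 0 -> pc a b l3 = 0 -> l1 < l2 < l3 ->
  (forall j, (j < 3)%nat -> 0 < sq3 (eigvec a b l1 l2 l3 j)) ->
  forall i j, (i < 3)%nat -> (j < 3)%nat ->
  calA a b l1 l2 l3 i j = calA_entries a b (matT a b l1 l2 l3) i j.
Proof.
  intros p1 p2 p3 Hl Hq i j Hi Hj.
  set (T := matT a b l1 l2 l3).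
  assert (HG : forall p q, (p < 3)%nat -> (q < 3)%nat -> gram T p q = idm p q).
  { intros p q Hp Hq'.
    assert (E : gram T p q = dot (normalize (eigvec a b l1 l2 l3 p)) (normalize (eigvec a b l1 l2 l3 q)))
      by (unfold gram, dot, T; rewrite !matT_eigvec by lia; reflexivity).
    rewrite E. destruct (Nat.eq_dec p q) as [<-|Hpq].
    - rewrite dot_normalize_self by auto.
      destruct p as [|[|[|p]]]; try lia; reflexivity.
    - rewrite dot_normalize, eigvec_orth by auto.
      destruct p as [|[|[|p]]]; try lia; destruct q as [|[|[|q]]]; try lia; unfold idm, mk3; simpl;
        first [lia | unfold Rdiv; ring]. }
  unfold calA, calA_entries. fold T. cbv zeta. unfold mulmm at 1.
  rewrite !(inv3_orthonormal T HG) by lia. unfold mulmm, matA, mk3. simpl. ring.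
Qed.

Lemma cubic_factor (c2 c1 c0 r1 r2 r3 : R) :
  r1 <> r2 -> r1 <> r3 -> r2 <> r3 ->
  r1^3 + c2*r1^2 + c1*r1 + c0 = 0 ->
  r2^3 + c2*r2^2 + c1*r2 + c0 = 0 ->
  r3^3 + c2*r3^2 + c1*r3 + c0 = 0 ->
  forall l, l^3 + c2*l^2 + c1*l + c0 = (l-r1)*(l-r2)*(l-r3).
Proof.
  intros n12 n13 n23 h1 h2 h3 l.
  assert (D12 : r1^2 + r1*r2 + r2^2 + c2*(r1+r2) + c1 = 0).
  { apply (Rmult_eq_reg_l (r1 - r2)); [|lra]. rewrite Rmult_0_r.
    transitivity ((r1^3 + c2*r1^2 + c1*r1 + c0) - (r2^3 + c2*r2^2 + c1*r2 + c0)); [ring|]. rewrite h1, h2; ring. }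
  assert (D13 : r1^2 + r1*r3 + r3^2 + c2*(r1+r3) + c1 = 0).
  { apply (Rmult_eq_reg_l (r1 - r3)); [|lra]. rewrite Rmult_0_r.
    transitivity ((r1^3 + c2*r1^2 + c1*r1 + c0) - (r3^3 + c2*r3^2 + c1*r3 + c0)); [ring|]. rewrite h1, h3; ring. }
  assert (C2 : c2 = -(r1+r2+r3)).
  { apply (Rmult_eq_reg_l (r2 - r3)); [|lra].
    transitivity (-(r2 - r3)*(r1+r2+r3) + ((r1^2 + r1*r2 + r2^2 + c2*(r1+r2) + c1) - (r1^2 + r1*r3 + r3^2 + c2*(r1+r3) + c1))); [ring|].
    rewrite D12, D13. ring. }
  assert (C1 : c1 = r1*r2 + r1*r3 + r2*r3) by (rewrite C2 in D12; lra).
  assert (C0 : c0 = - (r1*r2*r3)) by (rewrite C2, C1 in h1; lra).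
  rewrite C2, C1, C0. ring.
Qed.

Lemma pc_eq a b l :
  pc a b l = l^3 + (-(3+2*a+a^2))*l^2 + (6*a+2*a^2+2*a^3-9*b^2)*l + (-(4*a^3-27*b^2)).
Proof. unfold pc; ring. Qed.

Lemma pc_factor a b r1 r2 r3 : r1 < r2 < r3 -> pc a b r1 = 0 -> pc a b r2 = 0 -> pc a b r3 = 0 ->
  forall l, pc a b l = (l-r1)*(l-r2)*(l-r3).
Proof.
  intros H h1 h2 h3 l. rewrite pc_eq. rewrite pc_eq in h1, h2, h3.
  apply cubic_factor; auto; lra.
Qed.

Lemma pc_root_between a b u v : u < v -> pc a b u * pc a b v <= 0 ->
  exists r, u <= r <= v /\ pc a b r = 0.
Proof.
  intros Huv Hsign.
  assert (Hc : continuity (pc a b)) by (unfold pc; reg).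
  destruct (IVT_gen (pc a b) u v 0 Hc) as [r [Hr Hr0]].
  - unfold Rmin, Rmax. destruct (Rle_dec (pc a b u) (pc a b v)); nra.
  - exists r. rewrite Rmin_left, Rmax_right in Hr by lra. auto.
Qed.

Section Localization.
Variables a b : R.
Hypothesis Ha : 0 < a <= 1/100.
Hypothesis Hd : 0 <= 4*a^3 - 27*b^2.

Lemma eig_exist : exists r1 r2 r3, (0 <= r1 < a/2) /\ (a < r2 < 3*a) /\ (2 < r3 < 4) /\
  pc a b r1 = 0 /\ pc a b r2 = 0 /\ pc a b r3 = 0.
Proof.
  assert (0 <= b^2) by nra. assert (0 < a*a) by nra. assert (0 < a*a*a) by nra.
  assert (S0 : pc a b 0 <= 0) by (unfold pc; lra).
  assert (Sh : 0 < pc a b (a/2)) by (unfold pc; nra).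
  assert (Sa : 0 < pc a b a) by (unfold pc; nra).
  assert (S3a : pc a b (3*a) < 0) by (unfold pc; nra).
  assert (S2 : pc a b 2 < 0) by (unfold pc; nra).
  assert (S4 : 0 < pc a b 4) by (unfold pc; nra).
  destruct (pc_root_between a b 0 (a/2)) as [r1 [G1 E1]]; [lra | nra |].
  destruct (pc_root_between a b a (3*a)) as [r2 [G2 E2]]; [lra | nra |].
  destruct (pc_root_between a b 2 4) as [r3 [G3 E3]]; [lra | nra |].
  assert (r1 <> a/2) by (intros ->; lra).
  assert (r2 <> a /\ r2 <> 3*a) by (split; intros ->; lra).
  assert (r3 <> 2 /\ r3 <> 4) by (split; intros ->; lra).
  exists r1, r2, r3. repeat split; auto; lra.
Qed.

Lemma eig_loc l1 l2 l3 : l1 < l2 < l3 -> pc a b l1 = 0 -> pc a b l2 = 0 -> pc a b l3 = 0 ->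
  (0 <= l1 < a/2) /\ (a < l2 < 3*a) /\ (2 < l3 < 4).
Proof.
  intros Hl h1 h2 h3.
  destruct eig_exist as [r1 [r2 [r3 [R1 [R2 [R3 [e1 [e2 e3]]]]]]]].
  assert (Hroots : forall l, pc a b l = 0 -> l = r1 \/ l = r2 \/ l = r3).
  { intros l hl. rewrite (pc_factor a b r1 r2 r3) in hl by (auto; lra).
    destruct (Rmult_integral _ _ hl) as [h|h]; [destruct (Rmult_integral _ _ h)|]; lra. }
  destruct (Hroots _ h1) as [C1|[C1|C1]]; destruct (Hroots _ h2) as [C2|[C2|C2]];
    destruct (Hroots _ h3) as [C3|[C3|C3]]; subst; lra.
Qed.

Lemma sq1_lb l : 0 <= l < a/2 -> 9 * a^2 <= sq3 (ell1 a b l).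
Proof.
  intros Hl. unfold sq3, dot, ell1, mkv. simpl.
  assert (h : 4 * a <= (l-3)*(l-2*a)) by nra. nra.
Qed.
Lemma sq2_lb l : a < l < 3*a -> a^2 <= sq3 (ell2 a b l).
Proof.
  intros Hl. unfold sq3, dot, ell2, mkv. simpl.
  assert (h : (l - 3) * (l - a*(a*1)) - a*(a*1) <= - a) by nra. nra.
Qed.
Lemma sq3_lb l : 2 < l < 4 -> 1 <= sq3 (ell3 a b l).
Proof.
  intros Hl. unfold sq3, dot, ell3, mkv. simpl.
  assert (0 <= b^2) by nra. assert (b^2 <= 1/1000) by nra.
  assert (h : 1 <= (l - 2*a) * (l - a*(a*1)) - 9*(b*(b*1))) by nra. nra.
Qed.

End Localization.

Lemma sq3_nonzero (v : Vec) : 0 < sq3 v -> (v 0%nat <> 0 \/ v 1%nat <> 0 \/ v 2%nat <> 0).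
Proof.
  unfold sq3, dot. intros H.
  destruct (Req_dec (v 0%nat) 0) as [h0|h0]; [|left; auto].
  destruct (Req_dec (v 1%nat) 0) as [h1|h1]; [|right; left; auto].
  destruct (Req_dec (v 2%nat) 0) as [h2|h2]; [|right; right; auto].
  rewrite h0, h1, h2 in H. lra.
Qed.

Lemma three_eigenvalues a b : 0 < a <= 1/100 -> 0 <= 4*a^3 - 27*b^2 ->
  exists m1 m2 m3, m1 < m2 < m3 /\ is_eigenvalue (matS a b) m1 /\
    is_eigenvalue (matS a b) m2 /\ is_eigenvalue (matS a b) m3.
Proof.
  intros Ha Hd. destruct (eig_exist a b Ha Hd) as [r1 [r2 [r3 [R1 [R2 [R3 [e1 [e2 e3]]]]]]]].
  assert (0 < a^2) by (apply pow_lt; lra).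
  pose proof (sq1_lb a b Ha Hd r1 R1). pose proof (sq2_lb a b Ha Hd r2 R2). pose proof (sq3_lb a b Ha Hd r3 R3).
  exists r1, r2, r3. split; [lra|]. split; [|split].
  - exists (ell1 a b r1). split; [apply sq3_nonzero; lra | intros k _; apply ell1_eig; auto].
  - exists (ell2 a b r2). split; [apply sq3_nonzero; lra | intros k _; apply ell2_eig; auto].
  - exists (ell3 a b r3). split; [apply sq3_nonzero; lra | intros k _; apply ell3_eig; auto].
Qed.

(* is_derive_unique, stated on R -> R so that it rewrites Derive terms as they appear in goals. *)
Lemma Derive_of (f : R -> R) x l : is_derive f x l -> Derive f x = l.
Proof. apply is_derive_unique. Qed.

Lemma der_cont (f : R -> R) (y df : R) : is_derive f y df -> continuity_pt f y.
Proof. intros H. apply continuity_pt_filterlim. exact (@ex_derive_continuous R_AbsRing R_NormedModule f y (ex_intro _ df H)). Qed.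

Lemma mvt_eq (f df : R -> R) u v :
  (forall y, Rmin u v <= y <= Rmax u v -> is_derive f y (df y)) ->
  exists xi, Rmin u v <= xi <= Rmax u v /\ f v - f u = df xi * (v - u).
Proof.
  intros H. apply MVT_gen.
  - intros y Hy. apply H. lra.
  - intros y Hy. apply der_cont with (df y). apply H; auto.
Qed.

Lemma mvt_bound (f df : R -> R) u v M :
  (forall y, Rmin u v <= y <= Rmax u v -> is_derive f y (df y)) ->
  (forall y, Rmin u v <= y <= Rmax u v -> Rabs (df y) <= M) ->
  Rabs (f v - f u) <= M * Rabs (v - u).
Proof.
  intros H HM. destruct (mvt_eq f df u v H) as [xi [Hxi E]].
  rewrite E, Rabs_mult. apply Rmult_le_compat_r; [apply Rabs_pos| apply HM; auto].
Qed.

Lemma shift_derive (f : R -> R) (df x u : R) : is_derive f (x+u) df -> is_derive (fun v => f (x+v)) u df.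
Proof.
  intros H. pose proof (is_derive_comp f (fun v => x + v) u df 1 H) as K.
  assert (is_derive (fun v : R => x + v) u 1) by (auto_derive; auto; ring).
  specialize (K H0). unfold scal in K; simpl in K. unfold mult in K; simpl in K.
  replace df with (1 * df) by ring. exact K.
Qed.

Lemma refl_derive (f : R -> R) (df x u : R) : is_derive f (x-u) df -> is_derive (fun v => f (x-v)) u (-df).
Proof.
  intros H. pose proof (is_derive_comp f (fun v => x - v) u df (-1) H) as K.
  assert (is_derive (fun v : R => x - v) u (-1)) by (auto_derive; auto; ring).
  specialize (K H0). unfold scal in K; simpl in K. unfold mult in K; simpl in K.
  replace (-df) with (-1 * df) by ring. exact K.
Qed.

Lemma taylor2 (g0 g1 g2 : R -> R) x r M h :
  (forall y, Rabs (y - x) <= r -> is_derive g0 y (g1 y) /\ is_derive g1 y (g2 y) /\ Rabs (g2 y) <= M) ->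
  Rabs h <= r ->
  Rabs (g0 (x+h) - g0 x - h * g1 x) <= M * h^2.
Proof.
  intros H Hh.
  assert (Hin : forall y, Rmin x (x+h) <= y <= Rmax x (x+h) -> Rabs (y - x) <= r).
  { intros y Hy. unfold Rmin, Rmax in Hy. destruct (Rle_dec x (x+h)); apply Rabs_le; split;
    destruct (proj1 (Rabs_le_between _ _) Hh); lra. }
  destruct (mvt_eq g0 g1 x (x+h)) as [xi [Hxi E]].
  { intros y Hy. apply H. auto. }
  assert (B : Rabs (g1 xi - g1 x) <= M * Rabs (xi - x)).
  { apply mvt_bound with g2.
    - intros y Hy. apply H. apply Hin. unfold Rmin, Rmax in *. destruct (Rle_dec x xi), (Rle_dec x (x+h)); lra.
    - intros y Hy. apply H. apply Hin. unfold Rmin, Rmax in *. destruct (Rle_dec x xi), (Rle_dec x (x+h)); lra. }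
  assert (Hxr : Rabs (xi - x) <= Rabs h).
  { unfold Rmin, Rmax in Hxi. destruct (Rle_dec x (x+h)); apply Rabs_le; destruct (proj1 (Rabs_le_between h (Rabs h)) (Rle_refl _)); lra. }
  replace (g0 (x+h) - g0 x - h * g1 x) with (h * (g1 xi - g1 x)) by (replace (x + h - x) with h in E by ring; lra).
  rewrite Rabs_mult.
  assert (0 <= M).
  { destruct (H x) as [_ [_ Hm]]. rewrite Rminus_diag, Rabs_R0. pose proof (Rabs_pos h); lra. pose proof (Rabs_pos (g2 x)); lra. }
  pose proof (Rabs_pos h). pose proof (Rabs_pos (xi - x)).
  assert (Rabs h * Rabs h = h^2) by (rewrite <- Rabs_mult; simpl; rewrite Rmult_1_r; apply Rabs_pos_eq; nra).
  assert (Rabs (g1 xi - g1 x) <= M * Rabs h) by (eapply Rle_trans; [exact B| apply Rmult_le_compat_l; auto]).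
  nra.
Qed.

Lemma glaeser (g0 g1 g2 : R -> R) x r M :
  0 < r ->
  (forall y, Rabs (y - x) <= r -> is_derive g0 y (g1 y) /\ is_derive g1 y (g2 y) /\ Rabs (g2 y) <= M) ->
  (forall y, Rabs (y - x) <= r -> 0 <= g0 y) ->
  0 < g0 x <= r^2 ->
  Rabs (g1 x) <= 2 * sqrt (Rabs M + 1) * sqrt (g0 x).
Proof.
  intros Hr H Hpos Hx.
  set (K := sqrt (Rabs M + 1)). set (u := sqrt (g0 x)).
  assert (HK1 : 1 <= K). { unfold K. apply Rle_trans with (sqrt 1); [rewrite sqrt_1; lra|]. apply sqrt_le_1; pose proof (Rabs_pos M); lra. }
  assert (HK2 : K * K = Rabs M + 1) by (unfold K; apply sqrt_sqrt; pose proof (Rabs_pos M); lra).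
  assert (Hu : 0 < u) by (unfold u; apply sqrt_lt_R0; lra).
  assert (Hu2 : u * u = g0 x) by (unfold u; apply sqrt_sqrt; lra).
  assert (Hur : u <= r). { unfold u. rewrite <- (sqrt_pow2 r) by lra. apply sqrt_le_1; lra. }
  set (sg := if Rle_dec 0 (g1 x) then 1 else -1).
  set (h := - sg * u / K).
  assert (Hsg : sg * g1 x = Rabs (g1 x)).
  { unfold sg. destruct (Rle_dec 0 (g1 x)). rewrite Rabs_pos_eq; lra. rewrite Rabs_left; lra. }
  assert (Hsg2 : sg * sg = 1) by (unfold sg; destruct (Rle_dec 0 (g1 x)); lra).
  assert (Hh : Rabs h <= r).
  { unfold h. unfold Rdiv. rewrite !Rabs_mult, Rabs_Ropp, Rabs_inv, (Rabs_pos_eq u), (Rabs_pos_eq K) by lra.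
    assert (Rabs sg = 1) by (unfold sg; destruct (Rle_dec 0 (g1 x)); [rewrite Rabs_pos_eq|rewrite Rabs_left]; lra).
    rewrite H0. apply Rle_trans with u; [|auto].
    apply (Rmult_le_reg_r K); [lra|]. rewrite Rmult_assoc, Rinv_l by lra. nra. }
  pose proof (taylor2 g0 g1 g2 x r M h H Hh) as T.
  assert (P : 0 <= g0 (x + h)) by (apply Hpos; replace (x + h - x) with h by ring; auto).
  assert (hg : h * g1 x = - (u / K) * Rabs (g1 x)) by (unfold h; rewrite <- Hsg; field; lra).
  assert (h2 : h^2 = u * u / (K*K)) by (unfold h; replace ((- sg * u / K)^2) with ((sg * sg) * (u * u) / (K*K)) by (field; lra); rewrite Hsg2; field; lra).
  assert (Mh : M * h^2 <= u * u).
  { rewrite h2, HK2. apply Rle_trans with (Rabs M * (u*u/(Rabs M + 1))).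
    - apply Rmult_le_compat_r; [apply Rmult_le_pos; [nra| left; apply Rinv_0_lt_compat; pose proof (Rabs_pos M); lra]|apply Rle_abs].
    - apply (Rmult_le_reg_r (Rabs M + 1)); [pose proof (Rabs_pos M); lra|].
      field_simplify; [|pose proof (Rabs_pos M); lra]. pose proof (Rabs_pos M). nra. }
  pose proof (Rle_abs (g0 (x + h) - g0 x - h * g1 x)).
  assert (u / K * Rabs (g1 x) <= 2 * (u * u)) by lra.
  assert (Rabs (g1 x) <= 2 * K * u).
  { apply (Rmult_le_reg_l (u / K)). apply Rdiv_lt_0_compat; lra.
    replace (u / K * (2 * K * u)) with (2 * (u*u)) by (field; lra). auto. }
  lra.
Qed.

Lemma is_derive_eq (f g : R -> R) (x l l' : R) :
  is_derive f x l -> (forall y, f y = g y) -> l = l' -> is_derive g x l'.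
Proof. intros H E L. subst. eapply is_derive_ext; [exact E| exact H]. Qed.

Lemma second_difference (b1 b2 b3 : R -> R) x r M e :
  (forall y, Rabs (y - x) <= r -> is_derive b1 y (b2 y) /\ is_derive b2 y (b3 y) /\ Rabs (b3 y) <= M) ->
  0 <= e <= r ->
  Rabs (b1 (x + e) + b1 (x - e) - 2 * b1 x) <= 2 * M * e^2.
Proof.
  intros H He.
  assert (Hin : forall y, x - e <= y <= x + e -> Rabs (y - x) <= r) by (intros y Hy; apply Rabs_le; lra).
  destruct (mvt_eq b1 b2 x (x+e)) as [xi1 [Hx1 E1]].
  { intros y Hy. apply H, Hin. unfold Rmin, Rmax in Hy. destruct (Rle_dec x (x+e)); lra. }
  destruct (mvt_eq b1 b2 (x-e) x) as [xi2 [Hx2 E2]].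
  { intros y Hy. apply H, Hin. unfold Rmin, Rmax in Hy. destruct (Rle_dec (x-e) x); lra. }
  rewrite Rmin_left, Rmax_right in Hx1, Hx2 by lra.
  assert (B : Rabs (b2 xi1 - b2 xi2) <= M * Rabs (xi1 - xi2)).
  { apply mvt_bound with b3; intros y Hy; apply H, Hin; unfold Rmin, Rmax in Hy; destruct (Rle_dec xi2 xi1); lra. }
  assert (M0 : 0 <= M).
  { destruct (H x) as [_ [_ Hm]]; [rewrite Rminus_diag, Rabs_R0; lra|]. pose proof (Rabs_pos (b3 x)); lra. }
  assert (Hd12 : Rabs (xi1 - xi2) <= 2 * e) by (apply Rabs_le; lra).
  replace (b1 (x + e) + b1 (x - e) - 2 * b1 x) with (e * (b2 xi1 - b2 xi2))
    by (replace (x + e - x) with e in E1 by ring; replace (x - (x - e)) with e in E2 by ring; lra).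
  rewrite Rabs_mult, Rabs_pos_eq by lra.
  apply Rle_trans with (e * (M * (2 * e))); [|simpl; nra].
  apply Rmult_le_compat_l; [lra|]. eapply Rle_trans; [exact B|]. apply Rmult_le_compat_l; auto.
Qed.

(* Third-order central difference: |b(x+h) - b(x-h) - 2 h b'(x)| <= 2 M h^3 when |b'''| <= M
   (mean value theorem for u |-> b(x+u) - b(x-u) - 2 u b'(x), then second_difference). *)
Lemma central_difference (b0 b1 b2 b3 : R -> R) x r M h :
  (forall y, Rabs (y - x) <= r -> is_derive b0 y (b1 y) /\ is_derive b1 y (b2 y) /\
      is_derive b2 y (b3 y) /\ Rabs (b3 y) <= M) ->
  0 <= h <= r ->
  Rabs (b0 (x+h) - b0 (x-h) - 2 * h * b1 x) <= 2 * M * h^3.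
Proof.
  intros H Hh.
  set (G := fun u => b0 (x+u) - b0 (x-u) - 2 * u * b1 x).
  set (dG := fun u => b1 (x+u) + b1 (x-u) - 2 * b1 x).
  assert (HG : forall u, 0 <= u <= h -> is_derive G u (dG u)).
  { intros u Hu. unfold G, dG.
    assert (d1 : is_derive (fun v => b0 (x+v)) u (b1 (x+u))).
    { apply shift_derive. apply H. replace (x + u - x) with u by ring. rewrite Rabs_pos_eq; lra. }
    assert (d2 : is_derive (fun v => b0 (x-v)) u (- b1 (x-u))).
    { apply refl_derive. apply H. replace (x - u - x) with (-u) by ring. rewrite Rabs_Ropp, Rabs_pos_eq; lra. }
    assert (d3 : is_derive (fun v => 2 * v * b1 x) u (2 * b1 x)) by (auto_derive; auto; ring).
    pose proof (is_derive_minus _ _ _ _ _ (is_derive_minus _ _ _ _ _ d1 d2) d3) as D.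
    unfold minus, plus, opp in D; simpl in D.
    eapply is_derive_eq; [exact D| intros v; simpl; ring| ring]. }
  destruct (mvt_eq G dG 0 h) as [eta [Heta E]].
  { intros u Hu. apply HG. rewrite Rmin_left, Rmax_right in Hu by lra. lra. }
  rewrite Rmin_left, Rmax_right in Heta by lra.
  assert (M0 : 0 <= M).
  { destruct (H x) as [_ [_ [_ Hm]]]; [rewrite Rminus_diag, Rabs_R0; lra|]. pose proof (Rabs_pos (b3 x)); lra. }
  assert (BdG : Rabs (dG eta) <= 2 * M * h^2).
  { eapply Rle_trans; [apply (second_difference b1 b2 b3 x r M eta); [|lra]|].
    - intros y Hy. destruct (H y Hy) as [_ [? [? ?]]]. auto.
    - apply Rmult_le_compat_l; [lra|]. simpl. apply Rmult_le_compat; lra. }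
  replace (b0 (x + h) - b0 (x - h) - 2 * h * b1 x) with (dG eta * h)
    by (unfold G in E; replace (x + 0) with x in E by ring; replace (x - 0) with x in E by ring; lra).
  rewrite Rabs_mult, (Rabs_pos_eq h) by lra.
  replace (2 * M * h^3) with (2 * M * h^2 * h) by ring.
  apply Rmult_le_compat_r; lra.
Qed.

(* Growth factor of a nonnegative function with |a''| <= M over a window of width sqrt (a x). *)
Definition growth_const (M : R) : R := 1 + 2 * sqrt (Rabs M + 1) + Rabs M.

Lemma growth_const_ge1 M : 1 <= growth_const M.
Proof. unfold growth_const. pose proof (sqrt_pos (Rabs M + 1)). pose proof (Rabs_pos M). lra. Qed.

(* Taylor plus Glaeser: a0 (x + e) <= growth_const M * a0 x whenever |e| <= sqrt (a0 x). *)
Lemma glaeser_growth (a0 a1 a2 : R -> R) x r M e :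
  0 < r ->
  (forall y, Rabs (y - x) <= r -> is_derive a0 y (a1 y) /\ is_derive a1 y (a2 y) /\ Rabs (a2 y) <= M) ->
  (forall y, Rabs (y - x) <= r -> 0 <= a0 y) ->
  0 < a0 x <= r^2 -> Rabs e <= sqrt (a0 x) ->
  a0 (x + e) <= growth_const M * a0 x.
Proof.
  intros Hr Ha Hpos Hx He.
  set (A := a0 x) in *. set (h := sqrt A) in *. set (K := sqrt (Rabs M + 1)).
  assert (Hh2 : h * h = A) by (apply sqrt_sqrt; lra).
  assert (Hhr : h <= r) by (unfold h; rewrite <- (sqrt_pow2 r) by lra; apply sqrt_le_1; lra).
  pose proof (glaeser a0 a1 a2 x r M Hr Ha Hpos Hx) as G. fold A K h in G.
  pose proof (taylor2 a0 a1 a2 x r M e Ha ltac:(lra)) as T.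
  pose proof (Rle_abs (a0 (x + e) - a0 x - e * a1 x)). pose proof (Rle_abs (e * a1 x)).
  assert (Rabs (e * a1 x) <= h * (2 * K * h)) by (rewrite Rabs_mult; apply Rmult_le_compat; auto using Rabs_pos).
  assert (M * e^2 <= Rabs M * A).
  { apply Rle_trans with (Rabs M * e^2); [apply Rmult_le_compat_r; [nra | apply Rle_abs]|].
    apply Rmult_le_compat_l; [apply Rabs_pos|]. rewrite <- Hh2.
    replace (e^2) with (Rabs e * Rabs e) by (rewrite <- Rabs_mult; simpl; rewrite Rmult_1_r; apply Rabs_pos_eq; nra).
    apply Rmult_le_compat; auto using Rabs_pos. }
  assert (h * (2 * K * h) = 2 * K * A) by (rewrite <- Hh2; ring).
  unfold growth_const. fold K. unfold A in *. lra.
Qed.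

Lemma cusp_value_bound (a b A K : R) : 0 <= A -> 1 <= K -> 0 <= a <= K * A -> b ^ 2 <= a ^ 3 ->
  Rabs b <= K * sqrt K * A * sqrt A.
Proof.
  intros HA HK Ha Hb.
  rewrite <- sqrt_pow2 with (x := Rabs b) by apply Rabs_pos.
  assert (E : K * sqrt K * A * sqrt A = sqrt ((K * A)^3)).
  { replace ((K * A)^3) with ((K * A)^2 * (K * A)) by ring.
    rewrite sqrt_mult, sqrt_pow2, sqrt_mult by nra. ring. }
  rewrite E. apply sqrt_le_1; [apply pow2_ge_0 | apply pow_le; nra |].
  rewrite pow2_abs. apply Rle_trans with (a ^ 3); auto. apply pow_incr. lra.
Qed.

Definition Kb (M2 M3 : R) : R := growth_const M2 * sqrt (growth_const M2) + Rabs M3.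

(* If 0 <= a and b^2 <= a^3 near x, then |b'(x)| <= K a(x): take the central difference of b
   at the scale h = sqrt (a x), where |b| = O(a x * h) by cusp_value_bound and glaeser_growth. *)
Lemma cusp_derivative_bound (a0 a1 a2 b0 b1 b2 b3 : R -> R) x r M2 M3 :
  0 < r ->
  (forall y, Rabs (y - x) <= r -> is_derive a0 y (a1 y) /\ is_derive a1 y (a2 y) /\ Rabs (a2 y) <= M2) ->
  (forall y, Rabs (y - x) <= r -> is_derive b0 y (b1 y) /\ is_derive b1 y (b2 y) /\
      is_derive b2 y (b3 y) /\ Rabs (b3 y) <= M3) ->
  (forall y, Rabs (y - x) <= r -> 0 <= a0 y) ->
  (forall y, Rabs (y - x) <= r -> b0 y ^ 2 <= a0 y ^ 3) ->
  0 < a0 x <= r^2 ->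
  Rabs (b1 x) <= Kb M2 M3 * a0 x.
Proof.
  intros Hr Ha Hb Hpos Hba Hx.
  set (A := a0 x). set (h := sqrt A). set (K4 := growth_const M2).
  assert (Hh : 0 < h) by (apply sqrt_lt_R0; unfold A; lra).
  assert (Hh2 : h * h = A) by (apply sqrt_sqrt; unfold A; lra).
  assert (Hhr : h <= r) by (unfold h; rewrite <- (sqrt_pow2 r) by lra; apply sqrt_le_1; unfold A; lra).
  assert (HK4 : 1 <= K4) by apply growth_const_ge1.
  assert (Hb0 : forall e, Rabs e <= h -> Rabs (b0 (x + e)) <= K4 * sqrt K4 * A * h).
  { intros e He. assert (Hy : Rabs (x + e - x) <= r) by (replace (x+e-x) with e by ring; lra).
    apply cusp_value_bound with (a := a0 (x + e)); [unfold A; lra | exact HK4 | | apply Hba, Hy].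
    split; [apply Hpos, Hy | apply (glaeser_growth a0 a1 a2 x r M2); auto]. }
  pose proof (central_difference b0 b1 b2 b3 x r M3 h Hb ltac:(lra)) as S.
  pose proof (Hb0 h ltac:(rewrite Rabs_pos_eq; lra)) as P.
  pose proof (Hb0 (-h) ltac:(rewrite Rabs_Ropp, Rabs_pos_eq; lra)) as Q.
  replace (x + - h) with (x - h) in Q by ring.
  assert (T : Rabs (2 * h * b1 x) <= Rabs (b0 (x + h)) + Rabs (b0 (x - h)) + 2 * M3 * h^3).
  { replace (2 * h * b1 x) with (b0 (x + h) - b0 (x - h) - (b0 (x + h) - b0 (x - h) - 2 * h * b1 x)) by ring.
    eapply Rle_trans; [apply Rabs_triang|]. rewrite Rabs_Ropp.
    pose proof (Rabs_triang (b0 (x + h)) (- b0 (x - h))). rewrite Rabs_Ropp in H. unfold Rminus at 1. lra. }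
  rewrite Rabs_mult, Rabs_mult, (Rabs_pos_eq 2), (Rabs_pos_eq h) in T by lra.
  assert (h3 : M3 * h^3 <= Rabs M3 * (A * h)).
  { rewrite <- Hh2. replace (h^3) with (h*h*h) by ring. apply Rmult_le_compat_r; [nra | apply Rle_abs]. }
  pose proof (Rabs_pos M3).
  unfold Kb. fold K4. fold A.
  apply (Rmult_le_reg_l (2 * h)); [lra|].
  nra.
Qed.

Lemma cpt_eps f x : continuity_pt f x -> forall e, 0 < e -> exists d, 0 < d /\ forall y, Rabs (y - x) < d -> Rabs (f y - f x) < e.
Proof.
  intros H e He. destruct (H e He) as [d [Hd Hy]]. exists d. split; auto.
  intros y Hyx. destruct (Req_dec y x) as [E|E].
  - subst. rewrite Rminus_diag, Rabs_R0. auto.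
  - apply (Hy y). split. split; [exact I| auto]. exact Hyx.
Qed.

Lemma eps_cpt f x : (forall e, 0 < e -> exists d, 0 < d /\ forall y, Rabs (y - x) < d -> Rabs (f y - f x) < e) -> continuity_pt f x.
Proof.
  intros H e He. destruct (H e He) as [d [Hd Hy]]. exists d. split; auto.
  intros y [_ Hyx]. apply Hy. exact Hyx.
Qed.

Lemma derive_mult_vanishing (N E : R -> R) x n0 :
  derivable_pt_lim N x n0 -> N x = 0 -> continuity_pt E x ->
  derivable_pt_lim (fun y => N y * E y) x (n0 * E x).
Proof.
  intros HN N0 HE e He.
  set (B := Rabs (E x) + 1).
  assert (HB : 0 < B) by (unfold B; pose proof (Rabs_pos (E x)); lra).
  set (e1 := Rmin 1 (e / (2 * B))).
  assert (He1 : 0 < e1) by (unfold e1; apply Rmin_pos; [lra| apply Rdiv_lt_0_compat; lra]).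
  destruct (HN e1 He1) as [d1 Hd1].
  set (e2 := e / (2 * (Rabs n0 + 1))).
  assert (He2 : 0 < e2) by (unfold e2; apply Rdiv_lt_0_compat; [lra| pose proof (Rabs_pos n0); lra]).
  destruct (cpt_eps E x HE (Rmin 1 e2) (Rmin_pos _ _ Rlt_0_1 He2)) as [d2 [Hd2 Hy2]].
  assert (Hd : 0 < Rmin d1 d2) by (apply Rmin_pos; [apply cond_pos| auto]).
  exists (mkposreal _ Hd). intros h Hh0 Hh. simpl in Hh.
  assert (h1 : Rabs h < d1) by (eapply Rlt_le_trans; [exact Hh| apply Rmin_l]).
  assert (h2 : Rabs h < d2) by (eapply Rlt_le_trans; [exact Hh| apply Rmin_r]).
  specialize (Hd1 h Hh0 h1). rewrite N0 in Hd1.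
  specialize (Hy2 (x + h) ltac:(replace (x + h - x) with h by ring; auto)).
  rewrite N0, Rmult_0_l, Rminus_0_r.
  set (q := (N (x + h) - 0) / h) in *.
  replace (N (x + h) * E (x + h) / h) with (q * E (x + h)) by (unfold q; field; auto).
  replace (q * E (x + h) - n0 * E x) with ((q - n0) * E (x + h) + n0 * (E (x + h) - E x)) by ring.
  eapply Rle_lt_trans; [apply Rabs_triang|]. rewrite !Rabs_mult.
  assert (EB : Rabs (E (x + h)) <= B).
  { unfold B. pose proof (Rabs_triang (E (x+h) - E x) (E x)). replace (E (x + h) - E x + E x) with (E (x+h)) in H by ring.
    pose proof (Rmin_l 1 e2). lra. }
  assert (T1 : Rabs (q - n0) * Rabs (E (x + h)) <= e / (2 * B) * B).
  { apply Rmult_le_compat; auto using Rabs_pos. left. eapply Rlt_le_trans; [exact Hd1| apply Rmin_r]. }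
  assert (T2 : Rabs n0 * Rabs (E (x + h) - E x) < (Rabs n0 + 1) * e2).
  { pose proof (Rabs_pos n0). pose proof (Rmin_r 1 e2).
    apply Rle_lt_trans with (Rabs n0 * e2). apply Rmult_le_compat_l; lra. nra. }
  replace (e / (2 * B) * B) with (e / 2) in T1 by (field; lra).
  replace ((Rabs n0 + 1) * e2) with (e / 2) in T2 by (unfold e2; field; pose proof (Rabs_pos n0); lra).
  lra.
Qed.

Ltac continuity_pt_rules :=
  repeat match goal with
  | |- continuity_pt (fun y => @?f y + @?g y) _ => apply (continuity_pt_plus f g)
  | |- continuity_pt (fun y => @?f y * @?g y) _ => apply (continuity_pt_mult f g)
  | |- continuity_pt (fun y => @?f y ^ 2) _ => apply (continuity_pt_mult f (fun y => f y * 1))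
  | |- continuity_pt (fun _ => ?k) _ => apply continuity_pt_const; intros ? ?; reflexivity
  | |- continuity_pt (fun y => ?f y) _ => assumption
  end.

(* Divided difference of the monic cubic with coefficients c2, c1 (c0 cancels). *)
Definition cubic_dd (c2 c1 u v : R) : R := u^2 + u*v + v^2 + c2*(u+v) + c1.

Lemma cubic_dd_spec c2 c1 c0 u v :
  (u^3 + c2*u^2 + c1*u + c0) - (v^3 + c2*v^2 + c1*v + c0) = (u - v) * cubic_dd c2 c1 u v.
Proof. unfold cubic_dd; ring. Qed.

Lemma cubic_dd_root c2 c1 c0 l m2 m3 :
  (forall L, L^3 + c2 * L^2 + c1 * L + c0 = (L - l) * (L - m2) * (L - m3)) ->
  cubic_dd c2 c1 l l = (l - m2) * (l - m3).
Proof.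
  intros Hf. pose proof (Hf 0) as E0. pose proof (Hf 1) as E1. pose proof (Hf (-1)) as Em.
  assert (C2 : c2 = - (l + m2 + m3)) by (ring_simplify in E0; ring_simplify in E1; ring_simplify in Em; lra).
  assert (C1 : c1 = l * m2 + l * m3 + m2 * m3) by (ring_simplify in E0; ring_simplify in E1; ring_simplify in Em; lra).
  unfold cubic_dd. rewrite C2, C1. ring.
Qed.

Section SimpleRoot.
Variables (c2 c1 c0 l m2 m3 : R -> R) (x r g : R).
Hypothesis Hr : 0 < r.
Hypothesis Hg : 0 < g.
Hypothesis Hfactor : forall y, Rabs (y - x) < r ->
  forall L, L^3 + c2 y * L^2 + c1 y * L + c0 y = (L - l y) * (L - m2 y) * (L - m3 y).
Hypothesis Hgap : forall y, Rabs (y - x) < r -> g <= Rabs (l x - m2 y) /\ g <= Rabs (l x - m3 y).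

Let N (y : R) : R := l x ^3 + c2 y * l x ^2 + c1 y * l x + c0 y.

Lemma N_factor y : Rabs (y - x) < r -> N y = (l x - l y) * (l x - m2 y) * (l x - m3 y).
Proof. intros Hy. apply Hfactor; auto. Qed.

(* |l y - l x| <= |N y| / g^2, so the root is continuous where the coefficients are. *)
Lemma simple_root_continuous : continuity_pt N x -> continuity_pt l x.
Proof.
  intros NC. apply eps_cpt. intros e He.
  destruct (cpt_eps N x NC (e * (g * g))) as [d [Hd Hy]]; [apply Rmult_lt_0_compat; nra|].
  assert (N0 : N x = 0) by (rewrite N_factor by (rewrite Rminus_diag, Rabs_R0; auto); ring).
  exists (Rmin d r). split; [apply Rmin_pos; auto|].
  intros y Hyx. assert (Hyd : Rabs (y - x) < d) by (eapply Rlt_le_trans; [exact Hyx| apply Rmin_l]).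
  assert (Hyr : Rabs (y - x) < r) by (eapply Rlt_le_trans; [exact Hyx| apply Rmin_r]).
  specialize (Hy y Hyd). rewrite N0, Rminus_0_r, N_factor, !Rabs_mult in Hy by auto.
  destruct (Hgap y Hyr) as [g2 g3].
  assert (Rabs (l x - l y) * (g * g) < e * (g * g)).
  { eapply Rle_lt_trans; [|exact Hy]. rewrite Rmult_assoc. apply Rmult_le_compat_l; [apply Rabs_pos|].
    apply Rmult_le_compat; lra. }
  rewrite <- Rabs_Ropp. replace (- (l y - l x)) with (l x - l y) by ring.
  apply (Rmult_lt_reg_r (g * g)); [nra| auto].
Qed.

Let D (y : R) : R := cubic_dd (c2 y) (c1 y) (l y) (l x).

Lemma D_identity y : Rabs (y - x) < r -> (l y - l x) * D y = - N y.
Proof.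
  intros Hy. pose proof (Hfactor y Hy (l y)) as P. unfold D, N.
  rewrite <- cubic_dd_spec with (c0 := c0 y), P. ring.
Qed.

Lemma D_at_root : D x = (l x - m2 x) * (l x - m3 x) /\ D x <> 0.
Proof.
  assert (Hx0 : Rabs (x - x) < r) by (rewrite Rminus_diag, Rabs_R0; auto).
  assert (DX : D x = (l x - m2 x) * (l x - m3 x)) by (apply cubic_dd_root with (c0 x); auto).
  split; auto. destruct (Hgap x Hx0) as [gx2 gx3].
  rewrite DX. intro Z. destruct (Rmult_integral _ _ Z) as [Z'|Z']; rewrite Z', Rabs_R0 in *; lra.
Qed.

Lemma root_local_quotient : continuity_pt D x -> locally x (fun y => l x + N y * (- / D y) = l y).
Proof.
  intros DC. destruct D_at_root as [_ DXnz].
  destruct (cpt_eps D x DC (Rabs (D x) / 2)) as [d3 [Hd3 Hy3]].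
  { apply Rdiv_lt_0_compat; [apply Rabs_pos_lt; auto| lra]. }
  assert (Hm : 0 < Rmin r d3) by (apply Rmin_pos; auto).
  exists (mkposreal _ Hm). intros y Hy. change (Rabs (y - x) < Rmin r d3) in Hy.
  assert (Hyr : Rabs (y - x) < r) by (eapply Rlt_le_trans; [exact Hy| apply Rmin_l]).
  assert (Hyd : Rabs (y - x) < d3) by (eapply Rlt_le_trans; [exact Hy| apply Rmin_r]).
  specialize (Hy3 y Hyd).
  assert (Dnz : D y <> 0).
  { intro Z. rewrite Z, Rminus_0_l, Rabs_Ropp in Hy3. pose proof (Rabs_pos_lt _ DXnz). lra. }
  pose proof (D_identity y Hyr). replace (N y) with (-((l y - l x) * D y)) by lra. field; auto.
Qed.

Lemma simple_root_derive d2 d1 d0 :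
  is_derive c2 x d2 -> is_derive c1 x d1 -> is_derive c0 x d0 ->
  is_derive l x (- (d2 * (l x)^2 + d1 * l x + d0) / ((l x - m2 x) * (l x - m3 x))).
Proof.
  intros D2 D1 D0.
  set (n0 := d2 * l x ^ 2 + d1 * l x + d0).
  assert (HN : is_derive N x n0).
  { unfold N, n0. auto_derive; [repeat split; eexists; eauto|].
    erewrite (Derive_of _ x) by exact D2. erewrite (Derive_of _ x) by exact D1.
    erewrite (Derive_of _ x) by exact D0. ring. }
  assert (N0 : N x = 0) by (rewrite N_factor by (rewrite Rminus_diag, Rabs_R0; auto); ring).
  assert (LC : continuity_pt l x) by (apply simple_root_continuous, der_cont with n0; auto).
  assert (DC : continuity_pt D x).
  { assert (continuity_pt c2 x) by (apply der_cont with d2; auto).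
    assert (continuity_pt c1 x) by (apply der_cont with d1; auto).
    unfold D, cubic_dd. continuity_pt_rules. }
  destruct D_at_root as [DX DXnz].
  assert (EC : continuity_pt (fun y => - / D y) x).
  { apply (continuity_pt_opp (fun y => / D y)). apply (continuity_pt_inv D); auto. }
  pose proof (derive_mult_vanishing N (fun y => - / D y) x n0 (proj1 (is_derive_Reals _ _ _) HN) N0 EC) as PD.
  apply is_derive_Reals in PD.
  assert (PD2 : is_derive (fun y => l x + N y * (- / D y)) x (n0 * (- / D x))).
  { eapply is_derive_eq; [exact (is_derive_plus _ _ _ _ _ (is_derive_const (l x) x) PD)
                         | intros y; unfold plus; simpl; ring | unfold plus, zero; simpl; ring]. }
  eapply is_derive_ext_loc in PD2; [|exact (root_local_quotient DC)].
  eapply is_derive_eq; [exact PD2| intros; reflexivity|].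
  unfold n0. rewrite DX. rewrite DX in DXnz. field. split; intro Z; apply DXnz; rewrite Z; ring.
Qed.
End SimpleRoot.

Lemma rbar_rad (w1 w2 : Rbar) : Rbar_lt w1 0 -> Rbar_lt 0 w2 ->
  exists r, 0 < r /\ forall y, Rabs y < 3 * r -> Rbar_lt w1 y /\ Rbar_lt y w2.
Proof.
  intros H1 H2.
  assert (E1 : exists r1, 0 < r1 /\ forall y, Rabs y < r1 -> Rbar_lt w1 y).
  { destruct w1 as [v| |]; simpl in H1.
    - exists (-v). split; [lra|]. intros y Hy. simpl. pose proof (Rle_abs (-y)). rewrite Rabs_Ropp in H. lra.
    - contradiction.
    - exists 1. split; [lra|]. intros; simpl; auto. }
  assert (E2 : exists r2, 0 < r2 /\ forall y, Rabs y < r2 -> Rbar_lt y w2).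
  { destruct w2 as [v| |]; simpl in H2.
    - exists v. split; [lra|]. intros y Hy. simpl. pose proof (Rle_abs y). lra.
    - exists 1. split; [lra|]. intros; simpl; auto.
    - contradiction. }
  destruct E1 as [r1 [p1 h1]]. destruct E2 as [r2 [p2 h2]].
  exists (Rmin r1 r2 / 3). split. apply Rdiv_lt_0_compat; [apply Rmin_pos; auto| lra].
  intros y Hy. replace (3 * (Rmin r1 r2 / 3)) with (Rmin r1 r2) in Hy by field.
  split; [apply h1| apply h2]; eapply Rlt_le_trans; eauto; [apply Rmin_l| apply Rmin_r].
Qed.

Lemma loc_abs x R0 : Rabs x < R0 -> locally x (fun y => Rabs y < R0).
Proof.
  intros H. assert (He : 0 < R0 - Rabs x) by lra.
  exists (mkposreal _ He). intros y Hy. change (Rabs (y - x) < R0 - Rabs x) in Hy. simpl in y.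
  pose proof (Rabs_triang (y - x) x) as T. replace (y - x + x) with (y:R) in T by (simpl; ring). lra.
Qed.

Lemma loc_impl x (P Q : R -> Prop) : locally x P -> (forall y, P y -> Q y) -> locally x Q.
Proof. intros [e He] H. exists e. intros y Hy. apply H, He, Hy. Qed.

Lemma abs_mul_le x y X Y : Rabs x <= X -> Rabs y <= Y -> Rabs (x * y) <= X * Y.
Proof. intros. rewrite Rabs_mult. apply Rmult_le_compat; auto using Rabs_pos. Qed.

Lemma abs3 x y z : Rabs (x + y + z) <= Rabs x + Rabs y + Rabs z.
Proof. eapply Rle_trans; [apply Rabs_triang|]. pose proof (Rabs_triang x y). lra. Qed.

(* Numerator of the implicit derivative of a root l of pc, given a, a' (= ap), b, b' (= bp):
   minus the x-derivative of the coefficients of pc, evaluated at l. *)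
Definition numl (A ap b bp l : R) : R :=
  (-(2+2*A)*ap) * l^2 + ((6+4*A+6*A^2)*ap - 18*b*bp) * l + (-(12*A^2*ap - 54*b*bp)).

Lemma numl_bound s A ap b bp l Ka KB L :
  0 < s <= 1/10 -> A = s^2 -> Rabs ap <= Ka * s -> Rabs bp <= KB * s^2 -> Rabs b <= s^3 ->
  Rabs l <= L -> 0 <= L -> 0 <= Ka -> 0 <= KB ->
  Rabs (numl A ap b bp l) <= (3 * Ka * s) * L^2 + (7 * Ka * s + 18 * KB * s^5) * L + (12 * Ka * s^5 + 54 * KB * s^5).
Proof.
  intros Hs HA Hap Hbp Hb Hl HL HKa HKB. unfold numl.
  assert (hA : 0 < A <= 1/100) by (subst; nra).
  assert (e1 : Rabs (-(2+2*A)*ap) <= 3 * Ka * s).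
  { rewrite Rabs_mult, Rabs_Ropp, Rabs_pos_eq by lra. replace (3 * Ka * s) with (3 * (Ka * s)) by ring.
    apply Rmult_le_compat; try lra; apply Rabs_pos. }
  assert (e2 : Rabs (l^2) <= L^2).
  { rewrite <- RPow_abs. apply pow_incr. split; auto using Rabs_pos. }
  assert (ebb : Rabs (b * bp) <= KB * s^5).
  { replace (KB * s^5) with (s^3 * (KB * s^2)) by ring. apply abs_mul_le; auto. }
  assert (e3 : Rabs ((6+4*A+6*A^2)*ap - 18*b*bp) <= 7 * Ka * s + 18 * KB * s^5).
  { unfold Rminus. eapply Rle_trans; [apply Rabs_triang|]. rewrite Rabs_Ropp.
    assert (Rabs ((6+4*A+6*A^2)*ap) <= 7 * Ka * s).
    { rewrite Rabs_mult, Rabs_pos_eq by nra. replace (7 * Ka * s) with (7 * (Ka * s)) by ring.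
      apply Rmult_le_compat; try nra; apply Rabs_pos. }
    replace (18*b*bp) with (18*(b*bp)) by ring. rewrite (Rabs_mult 18), (Rabs_pos_eq 18) by lra. lra. }
  assert (e4 : Rabs (-(12*A^2*ap - 54*b*bp)) <= 12 * Ka * s^5 + 54 * KB * s^5).
  { rewrite Rabs_Ropp. unfold Rminus. eapply Rle_trans; [apply Rabs_triang|]. rewrite Rabs_Ropp.
    assert (Rabs (12*A^2*ap) <= 12 * Ka * s^5).
    { rewrite Rabs_mult, Rabs_pos_eq by nra. replace (12 * Ka * s^5) with (12 * A^2 * (Ka * s)) by (subst; ring).
      apply Rmult_le_compat_l; [nra| auto]. }
    replace (54*b*bp) with (54*(b*bp)) by ring. rewrite (Rabs_mult 54), (Rabs_pos_eq 54) by lra. lra. }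
  eapply Rle_trans; [apply abs3|].
  pose proof (abs_mul_le _ _ _ _ e1 e2). pose proof (abs_mul_le _ _ _ _ e3 Hl). lra.
Qed.

Lemma lder_small s A ap b bp l m2 m3 Ka KB :
  0 < s <= 1/10 -> A = s^2 -> Rabs ap <= Ka * s -> Rabs bp <= KB * s^2 -> Rabs b <= s^3 ->
  Rabs l <= 3 * A -> A / 2 <= Rabs (l - m2) -> 1 <= Rabs (l - m3) -> 0 <= Ka -> 0 <= KB ->
  Rabs (- numl A ap b bp l / ((l - m2) * (l - m3))) <= (200 * Ka + 300 * KB) * s.
Proof.
  intros Hs HA Hap Hbp Hb Hl g2 g3 HKa HKB.
  assert (hA : 0 < A) by (subst; nra).
  pose proof (numl_bound s A ap b bp l Ka KB (3 * A) Hs HA Hap Hbp Hb Hl ltac:(lra) HKa HKB) as N.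
  assert (Hden : A / 2 <= Rabs ((l - m2) * (l - m3))) by (rewrite Rabs_mult; nra).
  unfold Rdiv. rewrite Rabs_mult, Rabs_Ropp, Rabs_inv.
  apply (Rmult_le_reg_r (Rabs ((l - m2) * (l - m3)))); [lra|].
  rewrite Rmult_assoc, Rinv_l, Rmult_1_r by lra.
  eapply Rle_trans; [exact N|].
  assert (s3 : 0 < s^3) by (apply pow_lt; lra).
  assert (s5 : s^5 <= s^3) by (replace (s^5) with (s^3 * s^2) by ring; assert (s^2 <= 1) by nra; apply Rle_trans with (s^3*1); [apply Rmult_le_compat_l; lra| lra]).
  apply Rle_trans with ((200 * Ka + 300 * KB) * s * (A / 2)); [|apply Rmult_le_compat_l; [nra| auto]].
  subst A. replace ((3 * (s^2))^2) with (9 * s^4) by ring.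
  assert (0 <= Ka * s^5) by (apply Rmult_le_pos; [lra| left; apply pow_lt; lra]).
  assert (0 <= KB * s^5) by (apply Rmult_le_pos; [lra| left; apply pow_lt; lra]).
  assert (Ka * s^5 <= Ka * s^3) by (apply Rmult_le_compat_l; lra).
  assert (KB * s^5 <= KB * s^3) by (apply Rmult_le_compat_l; lra).
  assert (KB * s^7 <= KB * s^3) by (apply Rmult_le_compat_l; [lra| replace (s^7) with (s^3 * s^4) by ring; assert (s^4 <= 1) by (rewrite <- (pow1 4); apply pow_incr; lra); nra]).
  replace (3 * Ka * s * (9 * s ^ 4) + (7 * Ka * s + 18 * KB * s ^ 5) * (3 * s ^ 2) + (12 * Ka * s ^ 5 + 54 * KB * s ^ 5))
    with (27 * (Ka * s^5) + 21 * (Ka * s^3) + 54 * (KB * s^7) + 12 * (Ka * s^5) + 54 * (KB * s^5)) by ring.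
  replace ((200 * Ka + 300 * KB) * s * (s ^ 2 / 2)) with (100 * (Ka * s^3) + 150 * (KB * s^3)) by field.
  lra.
Qed.

Lemma lder_big s A ap b bp l m2 m3 Ka KB :
  0 < s <= 1/10 -> A = s^2 -> Rabs ap <= Ka * s -> Rabs bp <= KB * s^2 -> Rabs b <= s^3 ->
  Rabs l <= 4 -> 1 <= Rabs (l - m2) -> 1 <= Rabs (l - m3) -> 0 <= Ka -> 0 <= KB ->
  Rabs (- numl A ap b bp l / ((l - m2) * (l - m3))) <= (200 * Ka + 300 * KB) * s.
Proof.
  intros Hs HA Hap Hbp Hb Hl g2 g3 HKa HKB.
  pose proof (numl_bound s A ap b bp l Ka KB 4 Hs HA Hap Hbp Hb Hl ltac:(lra) HKa HKB) as N.
  assert (Hden : 1 <= Rabs ((l - m2) * (l - m3))) by (rewrite Rabs_mult; nra).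
  unfold Rdiv. rewrite Rabs_mult, Rabs_Ropp, Rabs_inv.
  apply (Rmult_le_reg_r (Rabs ((l - m2) * (l - m3)))); [lra|].
  rewrite Rmult_assoc, Rinv_l, Rmult_1_r by lra.
  eapply Rle_trans; [exact N|].
  assert (s5 : s^5 <= s) by (replace (s^5) with (s * s^4) by ring; assert (s^4 <= 1) by (rewrite <- (pow1 4); apply pow_incr; lra); apply Rle_trans with (s*1); [apply Rmult_le_compat_l; lra| lra]).
  assert (Ka * s^5 <= Ka * s) by (apply Rmult_le_compat_l; lra).
  assert (KB * s^5 <= KB * s) by (apply Rmult_le_compat_l; lra).
  apply Rle_trans with ((200 * Ka + 300 * KB) * s * 1); [|apply Rmult_le_compat_l; [nra| auto]].
  replace (3 * Ka * s * 4 ^ 2 + (7 * Ka * s + 18 * KB * s ^ 5) * 4 + (12 * Ka * s ^ 5 + 54 * KB * s ^ 5))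
    with (48 * (Ka * s) + 28 * (Ka * s) + 72 * (KB * s^5) + 12 * (Ka * s^5) + 54 * (KB * s^5)) by ring.
  assert (0 <= Ka * s) by nra. assert (0 <= KB * s) by nra.
  lra.
Qed.

Lemma quotient_value_bound f g K1 c sk sm : 0 < c -> 0 < sm -> 0 < sk -> 0 <= K1 ->
  Rabs f <= K1 * (sk * sm) -> c * sm <= Rabs g -> Rabs (f / g) <= K1 / c * sk.
Proof.
  intros Hc Hsm Hsk HK1 Hf Hg.
  assert (Gp : 0 < Rabs g) by nra.
  unfold Rdiv. rewrite Rabs_mult, Rabs_inv.
  apply (Rmult_le_reg_r (Rabs g)); [lra|]. rewrite Rmult_assoc, Rinv_l, Rmult_1_r by lra.
  apply Rle_trans with (K1 / c * sk * (c * sm));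
    [replace (K1 / c * sk * (c * sm)) with (K1 * (sk * sm)) by (field; lra); exact Hf|].
  apply Rmult_le_compat_l; [|lra]. apply Rmult_le_pos; [apply Rmult_le_pos; [lra | left; apply Rinv_0_lt_compat; lra] | lra].
Qed.

Lemma quotient_derivative_bound s f g df dg K1 K2 c sk sm : 0 < s -> 0 < c -> 0 < sm -> 0 < sk ->
  0 <= K1 -> 0 <= K2 -> Rabs f <= K1 * (sk * sm) -> s * Rabs df <= K1 * (sk * sm) ->
  s * Rabs dg <= K2 * sm -> c * sm <= Rabs g ->
  s * Rabs ((df * g - f * dg) / g ^ 2) <= (K1 / c + K1 * K2 / (c * c)) * sk.
Proof.
  intros Hs Hc Hsm Hsk HK1 HK2 Hf Hdf Hdg Hg.
  assert (Gp : 0 < Rabs g) by nra.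
  set (u := sm / Rabs g).
  assert (Hu : 0 < u <= / c).
  { unfold u. split; [apply Rdiv_lt_0_compat; lra|].
    apply (Rmult_le_reg_r (Rabs g)); [lra|]. unfold Rdiv. rewrite Rmult_assoc, Rinv_l, Rmult_1_r by lra.
    apply (Rmult_le_reg_l c); [lra|]. rewrite <- Rmult_assoc, Rinv_r by lra. lra. }
  assert (Hnum : s * Rabs (df * g - f * dg) <= K1 * (sk * sm) * Rabs g + K1 * (sk * sm) * (K2 * sm)).
  { unfold Rminus. eapply Rle_trans; [apply Rmult_le_compat_l; [lra | apply Rabs_triang]|].
    rewrite Rabs_Ropp, !Rabs_mult.
    assert (s * Rabs df * Rabs g <= K1 * (sk * sm) * Rabs g) by (apply Rmult_le_compat_r; lra).
    assert (Rabs f * (s * Rabs dg) <= K1 * (sk * sm) * (K2 * sm))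
      by (apply Rmult_le_compat; [apply Rabs_pos | apply Rmult_le_pos; [lra | apply Rabs_pos] | exact Hf | exact Hdg]).
    nra. }
  assert (E : s * Rabs ((df * g - f * dg) / g ^ 2) = s * Rabs (df * g - f * dg) / (Rabs g * Rabs g)).
  { unfold Rdiv. rewrite Rabs_mult, Rabs_inv, <- RPow_abs. simpl. field. lra. }
  rewrite E.
  apply Rle_trans with (K1 * sk * u + K1 * K2 * sk * (u * u)).
  - unfold u. apply (Rmult_le_reg_r (Rabs g * Rabs g)); [nra|].
    unfold Rdiv. rewrite Rmult_assoc, Rinv_l, Rmult_1_r by nra.
    replace ((K1 * sk * (sm * / Rabs g) + K1 * K2 * sk * (sm * / Rabs g * (sm * / Rabs g))) * (Rabs g * Rabs g))
      with (K1 * (sk * sm) * Rabs g + K1 * (sk * sm) * (K2 * sm)) by (field; lra).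
    exact Hnum.
  - assert (u * u <= / c * / c) by (apply Rmult_le_compat; lra).
    assert (K1 * sk * u <= K1 * sk * / c) by (apply Rmult_le_compat_l; nra).
    assert (K1 * K2 * sk * (u * u) <= K1 * K2 * sk * (/ c * / c))
      by (apply Rmult_le_compat_l; [apply Rmult_le_pos; [nra | lra] | lra]).
    unfold Rdiv. rewrite Rinv_mult. lra.
Qed.

Lemma finite_common_bound (P : nat -> R -> Prop) (n : nat) :
  (forall k K K', P k K -> K <= K' -> P k K') ->
  (forall k, (k < n)%nat -> exists K, P k K) ->
  exists K, 0 <= K /\ forall k, (k < n)%nat -> P k K.
Proof.
  intros Hmono. induction n as [|n IH]; intros Hex.
  - exists 0. split; [lra | intros k Hk; lia].
  - destruct IH as [K [HK0 HK]]; [intros k Hk; apply Hex; lia|].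
    destruct (Hex n ltac:(lia)) as [Kn HKn].
    exists (Rmax K Kn). split; [apply Rle_trans with K; [lra | apply Rmax_l]|].
    intros k Hk. destruct (Nat.eq_dec k n) as [->|Hkn].
    + apply (Hmono n Kn); auto. apply Rmax_r.
    + apply (Hmono k K); [apply HK; lia | apply Rmax_l].
Qed.

(* Along a family of points X i with scales 0 < s i <= 1, a family of
   functions F i is "of order k" when, uniformly in i, |F i (X i)| <= K s^k and the
   derivative satisfies s |(F i)' (X i)| <= K s^k: differentiating costs one power of s. *)
Section ScaledOrder.
Context {I : Type} (X s : I -> R).
Hypothesis Hs : forall i, 0 < s i <= 1.

Definition order_bound (k : nat) (F : I -> R -> R) (K : R) : Prop :=
  forall i, ex_derive (F i) (X i) /\ Rabs (F i (X i)) <= K * s i ^ k /\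
     s i * Rabs (Derive (F i) (X i)) <= K * s i ^ k.

Definition of_order (k : nat) (F : I -> R -> R) : Prop := exists K, order_bound k F K.

Lemma spow_pos i k : 0 < s i ^ k.
Proof. apply pow_lt. apply Hs. Qed.

Lemma order_bound_mono k F K K' : order_bound k F K -> K <= K' -> order_bound k F K'.
Proof.
  intros HK HKK' i. destruct (HK i) as [h1 [h2 h3]]. pose proof (spow_pos i k).
  assert (K * s i ^ k <= K' * s i ^ k) by (apply Rmult_le_compat_r; lra).
  split; [exact h1 | split; lra].
Qed.

Lemma order_K_nonneg k F : of_order k F -> exists K, 0 <= K /\ order_bound k F K.
Proof.
  intros [K HK]. exists (Rmax K 0). split; [apply Rmax_r|].
  apply (order_bound_mono k F K); auto. apply Rmax_l.
Qed.

Lemma order_const c : of_order 0 (fun _ _ => c).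
Proof.
  exists (Rabs c). intros i. repeat split.
  - apply ex_derive_const.
  - simpl. lra.
  - rewrite Derive_const, Rabs_R0. simpl. pose proof (Rabs_pos c). pose proof (Hs i). nra.
Qed.

Lemma order_add k F G : of_order k F -> of_order k G -> of_order k (fun i y => F i y + G i y).
Proof.
  intros [K1 H1] [K2 H2]. exists (K1 + K2). intros i.
  destruct (H1 i) as [d1 [v1 w1]]. destruct (H2 i) as [d2 [v2 w2]].
  repeat split.
  - apply (ex_derive_plus (F i) (G i)); auto.
  - eapply Rle_trans; [apply Rabs_triang|]. lra.
  - rewrite Derive_plus by auto. pose proof (Rabs_triang (Derive (F i) (X i)) (Derive (G i) (X i))).
    pose proof (Hs i). nra.
Qed.

Lemma order_opp k F : of_order k F -> of_order k (fun i y => - F i y).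
Proof.
  intros [K1 H1]. exists K1. intros i.
  destruct (H1 i) as [d1 [v1 w1]]. repeat split.
  - apply (ex_derive_opp (F i)); auto.
  - rewrite Rabs_Ropp; auto.
  - rewrite Derive_opp, Rabs_Ropp; auto.
Qed.

Lemma order_sub k F G : of_order k F -> of_order k G -> of_order k (fun i y => F i y - G i y).
Proof. intros h1 h2. apply (order_add k F (fun i y => - G i y)); auto. apply order_opp; auto. Qed.

Lemma order_mul k m F G : of_order k F -> of_order m G -> of_order (k + m) (fun i y => F i y * G i y).
Proof.
  intros h1 h2. destruct (order_K_nonneg _ _ h1) as [K1 [K1p H1]]. destruct (order_K_nonneg _ _ h2) as [K2 [K2p H2]].
  exists (2 * K1 * K2). intros i.
  destruct (H1 i) as [d1 [v1 w1]]. destruct (H2 i) as [d2 [v2 w2]].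
  pose proof (spow_pos i k). pose proof (spow_pos i m). rewrite pow_add.
  repeat split.
  - apply ex_derive_mult; auto.
  - rewrite Rabs_mult. assert (Rabs (F i (X i)) * Rabs (G i (X i)) <= (K1 * s i ^ k) * (K2 * s i ^ m)).
    { apply Rmult_le_compat; auto using Rabs_pos. }
    assert (0 <= K1 * K2 * (s i ^ k * s i ^ m)) by (apply Rmult_le_pos; nra). nra.
  - rewrite Derive_mult by auto.
    pose proof (Rabs_triang (Derive (F i) (X i) * G i (X i)) (F i (X i) * Derive (G i) (X i))) as T.
    rewrite !Rabs_mult in T.
    assert (A1 : s i * Rabs (Derive (F i) (X i)) * Rabs (G i (X i)) <= (K1 * s i ^ k) * (K2 * s i ^ m)).
    { apply Rmult_le_compat; auto using Rabs_pos. pose proof (Hs i). pose proof (Rabs_pos (Derive (F i) (X i))). nra. }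
    assert (A2 : Rabs (F i (X i)) * (s i * Rabs (Derive (G i) (X i))) <= (K1 * s i ^ k) * (K2 * s i ^ m)).
    { apply Rmult_le_compat; auto using Rabs_pos. pose proof (Hs i). pose proof (Rabs_pos (Derive (G i) (X i))). nra. }
    pose proof (Hs i). nra.
Qed.

Lemma spow_mono i k m : (m <= k)%nat -> s i ^ k <= s i ^ m.
Proof.
  intros Hmk. replace k with (m + (k - m))%nat by lia. rewrite pow_add.
  pose proof (spow_pos i m). assert (s i ^ (k - m) <= 1).
  { rewrite <- (pow1 (k - m)). apply pow_incr. pose proof (Hs i); lra. }
  assert (0 < s i ^ (k - m)) by apply spow_pos. nra.
Qed.

Lemma order_weak k m F : (m <= k)%nat -> of_order k F -> of_order m F.
Proof.
  intros Hmk h. destruct (order_K_nonneg _ _ h) as [K [Kp H]]. exists K. intros i.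
  destruct (H i) as [d [v w]]. pose proof (spow_mono i k m Hmk).
  repeat split; auto; eapply Rle_trans; eauto; apply Rmult_le_compat_l; auto.
Qed.

Lemma order_ext k F G : (forall i, locally (X i) (fun y => F i y = G i y)) -> of_order k F -> of_order k G.
Proof.
  intros Hl [K H]. exists K. intros i. destruct (H i) as [d [v w]].
  assert (e : F i (X i) = G i (X i)) by (apply (locally_singleton _ _ (Hl i))).
  repeat split.
  - apply (ex_derive_ext_loc (F i) (G i)); auto.
  - rewrite <- e; auto.
  - rewrite <- (Derive_ext_loc (F i) (G i)); auto.
Qed.

Lemma order_div k m F G c : 0 < c -> of_order (k + m) F -> of_order m G ->
  (forall i, c * s i ^ m <= Rabs (G i (X i))) -> of_order k (fun i y => F i y / G i y).
Proof.
  intros Hc h1 h2 Hlb.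
  destruct (order_K_nonneg _ _ h1) as [K1 [K1p H1]]. destruct (order_K_nonneg _ _ h2) as [K2 [K2p H2]].
  exists (K1 / c + K1 * K2 / (c * c)). intros i.
  destruct (H1 i) as [d1 [v1 w1]]. destruct (H2 i) as [d2 [v2 w2]]. rewrite pow_add in v1, w1.
  pose proof (spow_pos i k). pose proof (spow_pos i m). pose proof (Hs i). pose proof (Hlb i).
  assert (Gnz : G i (X i) <> 0) by (intro E; rewrite E, Rabs_R0 in *; nra).
  assert (0 <= K1 * K2 / (c * c) * s i ^ k).
  { apply Rmult_le_pos; [|lra]. apply Rmult_le_pos; [nra | left; apply Rinv_0_lt_compat; nra]. }
  split; [apply ex_derive_div; auto|]. split.
  - assert (Rabs (F i (X i) / G i (X i)) <= K1 / c * s i ^ k)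
      by (apply (quotient_value_bound _ _ K1 c (s i ^ k) (s i ^ m)); auto).
    lra.
  - rewrite Derive_div by auto. apply (quotient_derivative_bound _ _ _ _ _ K1 K2 c (s i ^ k) (s i ^ m)); auto; lra.
Qed.

Lemma order_sqrt m G c : 0 < c -> of_order (2 * m) G ->
  (forall i, c * s i ^ (2 * m) <= G i (X i)) -> of_order m (fun i y => sqrt (G i y)).
Proof.
  intros Hc h Hlb. destruct (order_K_nonneg _ _ h) as [K [Kp H]].
  exists (sqrt K + K / (2 * sqrt c)). intros i.
  destruct (H i) as [d [v w]]. pose proof (Hlb i) as lb.
  pose proof (spow_pos i m) as pm.
  assert (E2 : s i ^ (2 * m) = s i ^ m * s i ^ m) by (replace (2*m)%nat with (m+m)%nat by lia; apply pow_add).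
  rewrite E2 in v, w, lb.
  set (g := G i (X i)) in *. set (sm := s i ^ m) in *.
  assert (gpos : 0 < g) by (assert (0 < c*(sm*sm)) by (apply Rmult_lt_0_compat; [lra| apply Rmult_lt_0_compat; lra]); lra).
  assert (sc : 0 < sqrt c) by (apply sqrt_lt_R0; auto).
  assert (sg : sqrt c * sm <= sqrt g).
  { rewrite <- (sqrt_square sm) by lra. rewrite <- sqrt_mult by nra. apply sqrt_le_1; nra. }
  destruct d as [dg Hdg].
  pose proof (is_derive_sqrt (G i) (X i) dg Hdg gpos) as Hd.
  assert (Dg : Derive (G i) (X i) = dg) by (apply is_derive_unique; auto).
  rewrite Dg in w.
  repeat split.
  - eexists; eauto.
  - rewrite Rabs_pos_eq by apply sqrt_pos.
    assert (sqrt g <= sqrt K * sm).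
    { rewrite <- (sqrt_square sm) by lra. rewrite <- sqrt_mult by nra. pose proof (Rle_abs g).
      apply sqrt_le_1; [lra| apply Rmult_le_pos; [lra| apply Rmult_le_pos; lra] | lra]. }
    assert (0 <= K / (2 * sqrt c) * sm) by (apply Rmult_le_pos; [apply Rmult_le_pos; [lra|left; apply Rinv_0_lt_compat; lra]|lra]).
    lra.
  - replace (Derive (fun y => sqrt (G i y)) (X i)) with (dg / (2 * sqrt g)) by (symmetry; apply is_derive_unique; exact Hd).
    unfold Rdiv. rewrite Rabs_mult, Rabs_inv, Rabs_pos_eq with (x := 2 * sqrt g) by (pose proof (sqrt_pos g); lra).
    assert (0 < sqrt g) by nra.
    apply Rle_trans with (K * sm * sm * / (2 * sqrt g)).
    { rewrite <- Rmult_assoc. apply Rmult_le_compat_r; [left; apply Rinv_0_lt_compat; lra| lra]. }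
    apply (Rmult_le_reg_r (2 * sqrt g)); [lra|]. rewrite Rmult_assoc, Rinv_l, Rmult_1_r by lra.
    assert (0 <= sqrt K * sm * (2 * sqrt g)) by (pose proof (sqrt_pos K); apply Rmult_le_pos; nra).
    assert (K * sm * sm <= K / (2 * sqrt c) * sm * (2 * sqrt g)).
    { apply Rle_trans with (K / (2 * sqrt c) * sm * (2 * (sqrt c * sm))).
      - right. field. lra.
      - apply Rmult_le_compat_l; [apply Rmult_le_pos; [apply Rmult_le_pos; [lra|left; apply Rinv_0_lt_compat; lra]|lra]|lra]. }
    lra.
Qed.

Lemma order_ext_all k F G : (forall i y, F i y = G i y) -> of_order k F -> of_order k G.
Proof. intros E. apply order_ext. intros i. apply filter_forall. intros y. apply E. Qed.

Lemma order_add' k1 k2 F G : of_order k1 F -> of_order k2 G -> of_order (Nat.min k1 k2) (fun i y => F i y + G i y).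
Proof. intros h1 h2. apply order_add; [apply (order_weak k1); [lia|exact h1] | apply (order_weak k2); [lia|exact h2]]. Qed.
Lemma order_sub' k1 k2 F G : of_order k1 F -> of_order k2 G -> of_order (Nat.min k1 k2) (fun i y => F i y - G i y).
Proof. intros h1 h2. apply order_sub; [apply (order_weak k1); [lia|exact h1] | apply (order_weak k2); [lia|exact h2]]. Qed.
Lemma order_sq k F : of_order k F -> of_order (k + k) (fun i y => F i y ^ 2).
Proof. intros h. eapply order_ext_all; [| apply (order_mul k k F F h h)]. intros i y. simpl. ring. Qed.
Lemma order_normalize (v : I -> R -> Vec) (k : nat -> nat) m c : 0 < c ->
  (forall j, (j < 3)%nat -> (m <= k j)%nat /\ of_order (k j) (fun i y => v i y j)) ->
  (forall i, c * s i ^ (2 * m) <= sq3 (v i (X i))) ->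
  forall j, (j < 3)%nat -> of_order (k j - m) (fun i y => normalize (v i y) j).
Proof.
  intros Hc Hk Hlb j Hj.
  assert (Hsq : forall p, (p < 3)%nat -> of_order (2 * m) (fun i y => v i y p * v i y p)).
  { intros p Hp. destruct (Hk p Hp) as [Hmp Hop].
    apply (order_weak (k p + k p)); [lia | apply order_mul; auto]. }
  assert (Hn : of_order m (fun i y => vnorm (v i y))).
  { apply (order_ext_all _ (fun i y => sqrt (sq3 (v i y)))); [intros; unfold vnorm, sq3, dot; f_equal; ring|].
    apply (order_sqrt m _ c Hc); auto.
    unfold sq3, dot. apply order_add; [apply order_add|]; apply Hsq; lia. }
  assert (Hnlb : forall i, sqrt c * s i ^ m <= Rabs (vnorm (v i (X i)))).
  { intros i. unfold vnorm. rewrite Rabs_pos_eq by apply sqrt_pos.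
    pose proof (spow_pos i m). specialize (Hlb i).
    replace (s i ^ (2 * m)) with ((s i ^ m)^2) in Hlb by (rewrite <- pow_mult; f_equal; lia).
    rewrite <- (sqrt_pow2 (s i ^ m)) by lra. rewrite <- sqrt_mult by (try apply pow2_ge_0; lra).
    replace (v i (X i) 0%nat ^ 2 + v i (X i) 1%nat ^ 2 + v i (X i) 2%nat ^ 2) with (sq3 (v i (X i)))
      by (unfold sq3, dot; ring).
    assert (0 <= c * (s i ^ m) ^ 2) by (apply Rmult_le_pos; [lra| apply pow2_ge_0]).
    apply sqrt_le_1; lra. }
  destruct (Hk j Hj) as [Hmj Hoj].
  apply (order_div (k j - m) m _ _ (sqrt c)); [apply sqrt_lt_R0; auto | | exact Hn | exact Hnlb].
  rewrite Nat.sub_add; auto.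
Qed.

Lemma uniform_order_bound (k : nat -> nat -> nat) (F : nat -> nat -> I -> R -> R) :
  (forall p q, (p < 3)%nat -> (q < 3)%nat -> of_order (k p q) (F p q)) ->
  exists K, 0 <= K /\ forall p q, (p < 3)%nat -> (q < 3)%nat -> order_bound (k p q) (F p q) K.
Proof.
  intros HF.
  assert (Hrow : forall p, (p < 3)%nat -> exists K, 0 <= K /\ forall q, (q < 3)%nat -> order_bound (k p q) (F p q) K).
  { intros p Hp. apply (finite_common_bound (fun q K => order_bound (k p q) (F p q) K)).
    - intros q K K' HK HKK'. apply (order_bound_mono _ _ K); auto.
    - intros q Hq. destruct (order_K_nonneg _ _ (HF p q Hp Hq)) as [K [_ HK]]. exists K; auto. }
  destruct (finite_common_bound (fun p K => forall q, (q < 3)%nat -> order_bound (k p q) (F p q) K) 3)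
    as [K [HK0 HK]].
  - intros p K K' HK HKK' q Hq. apply (order_bound_mono _ _ K); auto.
  - intros p Hp. destruct (Hrow p Hp) as [K [_ HK]]. exists K; auto.
  - exists K; auto.
Qed.

End ScaledOrder.

Ltac order_step :=
  match goal with
  | |- of_order _ _ _ (fun _ _ => ?c) => eapply order_const
  | |- of_order _ _ _ (fun i y => @?A i y + @?B i y) => eapply (@order_add' _ _ _ _ _ _ A B)
  | |- of_order _ _ _ (fun i y => @?A i y - @?B i y) => eapply (@order_sub' _ _ _ _ _ _ A B)
  | |- of_order _ _ _ (fun i y => @?A i y * @?B i y) => eapply (@order_mul _ _ _ _ _ _ A B)
  | |- of_order _ _ _ (fun i y => - @?A i y) => eapply (@order_opp _ _ _ _ A)
  | |- of_order _ _ _ (fun i y => @?A i y ^ 2) => eapply (@order_sq _ _ _ _ _ A)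
  end.

Record Idx := mkIdx { il1 : R -> R -> R; il2 : R -> R -> R; il3 : R -> R -> R; it : R; ix : R }.

(* The setting of the lemma, after unpacking smooth_bdd: Fa, Fb are the partial derivatives
   of a, b on Dom, and only the bounds on a_x, a_xx, a_t and b_xxx are used.  (-3r, 3r) lies
   in (w1, w2). *)
Section Setting.
Variables (a b : R -> R -> R) (c Tt : R) (w1 w2 : Rbar) (Fa Fb : nat -> nat -> R -> R -> R) (r M01 M02 M10 N03 : R).
Definition Dom (t x : R) : Prop := -c < t < Tt /\ Rbar_lt w1 x /\ Rbar_lt x w2.
Hypothesis Hc : 0 < c.
Hypothesis HT : 0 < Tt.
Hypothesis Fa0 : forall t x, Dom t x -> Fa 0%nat 0%nat t x = a t x.
Hypothesis Fad : forall i j t x, Dom t x -> is_derive (fun s => Fa i j s x) t (Fa (S i) j t x) /\ is_derive (fun y => Fa i j t y) x (Fa i (S j) t x).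
Hypothesis Fb0 : forall t x, Dom t x -> Fb 0%nat 0%nat t x = b t x.
Hypothesis Fbd : forall i j t x, Dom t x -> is_derive (fun s => Fb i j s x) t (Fb (S i) j t x) /\ is_derive (fun y => Fb i j t y) x (Fb i (S j) t x).
Hypothesis Hr : 0 < r.
Hypothesis Hrw : forall y, Rabs y < 3 * r -> Rbar_lt w1 y /\ Rbar_lt y w2.
Hypothesis HM01 : forall t x, Dom t x -> Rabs (Fa 0%nat 1%nat t x) <= M01.
Hypothesis HM02 : forall t x, Dom t x -> Rabs (Fa 0%nat 2%nat t x) <= M02.
Hypothesis HM10 : forall t x, Dom t x -> Rabs (Fa 1%nat 0%nat t x) <= M10.
Hypothesis HN03 : forall t x, Dom t x -> Rabs (Fb 0%nat 3%nat t x) <= N03.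
Hypothesis HD : forall t x : R, 0 <= t < Tt -> Rbar_lt w1 x -> Rbar_lt x w2 -> 0 <= 4 * a t x ^ 3 - 27 * b t x ^ 2.
Hypothesis Ha00 : a 0 0 = 0.
Hypothesis Hpos : forall t x : R, 0 < t < Tt -> Rbar_lt w1 x -> Rbar_lt x w2 -> 0 < a t x.

Lemma dom_near_axis t y : 0 <= t < Tt -> Rabs y < 3 * r -> Dom t y.
Proof. intros Ht Hy. destruct (Hrw y Hy). repeat split; auto; lra. Qed.

Lemma dom_locally t y : 0 <= t < Tt -> Rabs y < 3 * r -> locally y (fun z => Dom t z).
Proof. intros Ht Hy. eapply loc_impl; [apply (loc_abs y (3*r) Hy)|]. intros z Hz. apply dom_near_axis; auto. Qed.

Lemma a_derive t y : 0 <= t < Tt -> Rabs y < 3 * r -> is_derive (fun z => a t z) y (Fa 0%nat 1%nat t y).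
Proof.
  intros Ht Hy. apply (is_derive_ext_loc (fun z => Fa 0%nat 0%nat t z)).
  - eapply loc_impl; [apply (dom_locally t y Ht Hy)|]. intros z Hz. apply Fa0; auto.
  - apply Fad. apply dom_near_axis; auto.
Qed.

Lemma b_derive t y : 0 <= t < Tt -> Rabs y < 3 * r -> is_derive (fun z => b t z) y (Fb 0%nat 1%nat t y).
Proof.
  intros Ht Hy. apply (is_derive_ext_loc (fun z => Fb 0%nat 0%nat t z)).
  - eapply loc_impl; [apply (dom_locally t y Ht Hy)|]. intros z Hz. apply Fb0; auto.
  - apply Fbd. apply dom_near_axis; auto.
Qed.

Lemma near_ball x y : Rabs x < r -> Rabs (y - x) <= r -> Rabs y < 3 * r.
Proof. intros H1 H2. pose proof (Rabs_triang (y - x) x). replace (y - x + x) with y in H by ring. lra. Qed.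

(* Glaeser: |a_x| <= Ka sqrt a, since a >= 0 for t > 0. *)
Lemma a_x_bound t x : 0 < t < Tt -> Rabs x < r -> a t x <= r^2 ->
  Rabs (Fa 0%nat 1%nat t x) <= 2 * sqrt (Rabs M02 + 1) * sqrt (a t x).
Proof.
  intros Ht Hx Hax.
  assert (Dx : Dom t x) by (apply dom_near_axis; [lra| lra]).
  rewrite <- (Fa0 t x Dx).
  apply (glaeser (fun y => Fa 0%nat 0%nat t y) (fun y => Fa 0%nat 1%nat t y) (fun y => Fa 0%nat 2%nat t y) x r M02 Hr).
  - intros y Hy. assert (Dy : Dom t y) by (apply dom_near_axis; [lra| eapply near_ball; eauto]).
    split; [|split]; [apply (proj2 (Fad 0 0 t y Dy)) | apply (proj2 (Fad 0 1 t y Dy)) | apply HM02; auto].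
  - intros y Hy. assert (Dy : Dom t y) by (apply dom_near_axis; [lra| eapply near_ball; eauto]).
    rewrite Fa0 by auto. left. apply Hpos; try apply Dy. lra.
  - rewrite Fa0 by auto. split; auto. apply Hpos; try apply Dx. lra.
Qed.

(* The cusp bound |b_x| <= KB a, since b^2 <= 4 a^3 / 27 <= a^3. *)
Lemma b_x_bound t x : 0 < t < Tt -> Rabs x < r -> a t x <= r^2 ->
  Rabs (Fb 0%nat 1%nat t x) <= Kb M02 N03 * a t x.
Proof.
  intros Ht Hx Hax.
  assert (Dx : Dom t x) by (apply dom_near_axis; [lra| lra]).
  rewrite <- (Fa0 t x Dx).
  apply (cusp_derivative_bound (fun y => Fa 0%nat 0%nat t y) (fun y => Fa 0%nat 1%nat t y) (fun y => Fa 0%nat 2%nat t y)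
           (fun y => Fb 0%nat 0%nat t y) (fun y => Fb 0%nat 1%nat t y) (fun y => Fb 0%nat 2%nat t y) (fun y => Fb 0%nat 3%nat t y) x r M02 N03 Hr).
  - intros y Hy. assert (Dy : Dom t y) by (apply dom_near_axis; [lra| eapply near_ball; eauto]).
    split; [|split]; [apply (proj2 (Fad 0 0 t y Dy)) | apply (proj2 (Fad 0 1 t y Dy)) | apply HM02; auto].
  - intros y Hy. assert (Dy : Dom t y) by (apply dom_near_axis; [lra| eapply near_ball; eauto]).
    split; [|split; [|split]]; [apply (proj2 (Fbd 0 0 t y Dy)) | apply (proj2 (Fbd 0 1 t y Dy)) | apply (proj2 (Fbd 0 2 t y Dy)) | apply HN03; auto].
  - intros y Hy. assert (Dy : Dom t y) by (apply dom_near_axis; [lra| eapply near_ball; eauto]).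
    rewrite Fa0 by auto. left. apply Hpos; try apply Dy. lra.
  - intros y Hy. assert (Dy : Dom t y) by (apply dom_near_axis; [lra| eapply near_ball; eauto]).
    rewrite Fa0, Fb0 by auto. destruct Dy as [_ [D1 D2]].
    pose proof (HD t y ltac:(lra) D1 D2). pose proof (Hpos t y ltac:(lra) D1 D2).
    assert (0 < a t y ^ 3) by (apply pow_lt; lra). lra.
  - rewrite Fa0 by auto. split; auto. apply Hpos; try apply Dx. lra.
Qed.

Lemma a_small t x : 0 <= t < Tt -> Rabs x < 3 * r -> Rabs (a t x) <= Rabs M10 * t + Rabs M01 * Rabs x.
Proof.
  intros Ht Hx.
  assert (D0 : Dom 0 0) by (apply dom_near_axis; [lra| rewrite Rabs_R0; lra]).
  assert (Dt0 : Dom t 0) by (apply dom_near_axis; [lra| rewrite Rabs_R0; lra]).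
  assert (Dtx : Dom t x) by (apply dom_near_axis; auto).
  assert (A1 : Rabs (Fa 0%nat 0%nat t 0 - Fa 0%nat 0%nat 0 0) <= Rabs M10 * Rabs (t - 0)).
  { apply (mvt_bound (fun s => Fa 0%nat 0%nat s 0) (fun s => Fa 1%nat 0%nat s 0)).
    - intros y Hy. rewrite Rmin_left, Rmax_right in Hy by lra. apply Fad. apply dom_near_axis; [lra| rewrite Rabs_R0; lra].
    - intros y Hy. rewrite Rmin_left, Rmax_right in Hy by lra. eapply Rle_trans; [apply HM10|apply Rle_abs].
      apply dom_near_axis; [lra| rewrite Rabs_R0; lra]. }
  assert (A2 : Rabs (Fa 0%nat 0%nat t x - Fa 0%nat 0%nat t 0) <= Rabs M01 * Rabs (x - 0)).
  { apply (mvt_bound (fun y => Fa 0%nat 0%nat t y) (fun y => Fa 0%nat 1%nat t y)).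
    - intros y Hy. apply Fad. apply dom_near_axis; [lra|].
      unfold Rmin, Rmax in Hy. destruct (Rle_dec 0 x); destruct (proj1 (Rabs_le_between x (Rabs x)) (Rle_refl _)); apply Rabs_def1; lra.
    - intros y Hy. eapply Rle_trans; [apply HM01|apply Rle_abs]. apply dom_near_axis; [lra|].
      unfold Rmin, Rmax in Hy. destruct (Rle_dec 0 x); destruct (proj1 (Rabs_le_between x (Rabs x)) (Rle_refl _)); apply Rabs_def1; lra. }
  rewrite Fa0 in A1, A2 by auto. rewrite Fa0 in A1 by auto. rewrite Ha00 in A1.
  rewrite !Rminus_0_r in A1, A2. rewrite (Rabs_pos_eq (t - 0)) in A1 by lra. replace (t - 0) with t in A1 by ring.
  pose proof (Rabs_triang (a t x - a t 0) (a t 0)). replace (a t x - a t 0 + a t 0) with (a t x) in H by ring.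
  rewrite (Fa0 t 0 Dt0) in A2. lra.
Qed.

(* The constants of the x-derivative bounds and the radius delta of the neighbourhood U,
   chosen so that 0 < a <= min (1/100) (r^2) on U /\ {t > 0}. *)
Definition Ka : R := 2 * sqrt (Rabs M02 + 1).
Definition KB : R := Kb M02 N03.
Definition KL : R := 200 * Ka + 300 * KB.
Definition eps0 : R := Rmin (1/100) (r^2).
Definition delta : R := Rmin Tt (Rmin r (eps0 / (Rabs M10 + Rabs M01 + 1))).

Lemma Ka_pos : 0 <= Ka. Proof. unfold Ka. pose proof (sqrt_pos (Rabs M02 + 1)). lra. Qed.
Lemma KB_pos : 0 <= KB.
Proof.
  unfold KB, Kb. pose proof (growth_const_ge1 M02). pose proof (sqrt_pos (growth_const M02)).
  pose proof (Rabs_pos N03). assert (0 <= growth_const M02 * sqrt (growth_const M02)) by (apply Rmult_le_pos; lra).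
  lra.
Qed.
Lemma KL_pos : 0 <= KL. Proof. unfold KL. pose proof Ka_pos. pose proof KB_pos. lra. Qed.

Lemma delta_pos : 0 < delta.
Proof.
  unfold delta, eps0. apply Rmin_pos; auto. apply Rmin_pos; auto. apply Rdiv_lt_0_compat.
  apply Rmin_pos; [lra| apply pow_lt; auto]. pose proof (Rabs_pos M10). pose proof (Rabs_pos M01). lra.
Qed.

Lemma region_facts t x : 0 < t < delta -> Rabs x < delta ->
  0 < t < Tt /\ Rabs x < r /\ Dom t x /\ 0 < a t x /\ a t x <= 1/100 /\ a t x <= r^2 /\ 0 <= 4 * a t x ^ 3 - 27 * b t x ^ 2.
Proof.
  intros Ht Hx.
  assert (d1 : delta <= Tt) by apply Rmin_l.
  assert (d2 : delta <= r) by (eapply Rle_trans; [apply Rmin_r| apply Rmin_l]).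
  assert (d3 : delta <= eps0 / (Rabs M10 + Rabs M01 + 1)) by (eapply Rle_trans; [apply Rmin_r| apply Rmin_r]).
  assert (Dx : Dom t x) by (apply dom_near_axis; lra).
  destruct Dx as [Dt [Dw1 Dw2]].
  pose proof (Hpos t x ltac:(lra) Dw1 Dw2) as P.
  pose proof (a_small t x ltac:(lra) ltac:(lra)) as S.
  pose proof (Rabs_pos M10). pose proof (Rabs_pos M01).
  assert (Ssm : a t x <= eps0).
  { rewrite Rabs_pos_eq in S by lra.
    assert (Rabs M10 * t + Rabs M01 * Rabs x <= (Rabs M10 + Rabs M01) * delta).
    { pose proof (Rabs_pos x). nra. }
    assert ((Rabs M10 + Rabs M01) * delta <= eps0).
    { apply Rle_trans with ((Rabs M10 + Rabs M01 + 1) * (eps0 / (Rabs M10 + Rabs M01 + 1))).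
      - pose proof delta_pos. nra.
      - right. field. lra. }
    lra. }
  assert (e1 : eps0 <= 1/100) by apply Rmin_l. assert (e2 : eps0 <= r^2) by apply Rmin_r.
  refine (conj _ (conj _ (conj _ (conj P (conj _ (conj _ _)))))); try lra.
  apply dom_near_axis; lra. apply HD; auto; lra.
Qed.

Definition eigen_ordered (l1 l2 l3 : R -> R -> R) : Prop := forall t x, 0 < t < delta -> Rabs x < delta ->
  l1 t x < l2 t x < l3 t x /\ is_eigenvalue (matS (a t x) (b t x)) (l1 t x) /\
  is_eigenvalue (matS (a t x) (b t x)) (l2 t x) /\ is_eigenvalue (matS (a t x) (b t x)) (l3 t x).

Lemma eig_facts l1 l2 l3 t x : eigen_ordered l1 l2 l3 -> 0 < t < delta -> Rabs x < delta ->
  pc (a t x) (b t x) (l1 t x) = 0 /\ pc (a t x) (b t x) (l2 t x) = 0 /\ pc (a t x) (b t x) (l3 t x) = 0 /\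
  l1 t x < l2 t x < l3 t x /\
  (0 <= l1 t x < a t x / 2) /\ (a t x < l2 t x < 3 * a t x) /\ (2 < l3 t x < 4).
Proof.
  intros H Ht Hx. destruct (H t x Ht Hx) as [Hl [E1 [E2 E3]]].
  apply eig_root in E1. apply eig_root in E2. apply eig_root in E3.
  destruct (region_facts t x Ht Hx) as [_ [_ [_ [P1 [P2 [_ P3]]]]]].
  destruct (eig_loc (a t x) (b t x) ltac:(lra) P3 (l1 t x) (l2 t x) (l3 t x) Hl E1 E2 E3) as [B1 [B2 B3]].
  repeat split; auto; lra.
Qed.

Lemma b_small t x : 0 < t < delta -> Rabs x < delta -> Rabs (b t x) <= sqrt (a t x) ^ 3.
Proof.
  intros Ht Hx. destruct (region_facts t x Ht Hx) as [_ [_ [_ [P1 [P2 [_ P3]]]]]].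
  set (A := a t x) in *. set (B := b t x) in *.
  assert (B^2 <= A^3) by (assert (0 < A^3) by (apply pow_lt; lra); lra).
  rewrite <- (sqrt_pow2 (Rabs B)) by apply Rabs_pos. rewrite pow2_abs.
  replace (sqrt A ^ 3) with (sqrt (A^3)).
  - apply sqrt_le_1; [nra| left; apply pow_lt; lra| auto].
  - replace (A^3) with (A^2 * A) by ring. rewrite sqrt_mult by nra. rewrite sqrt_pow2 by lra.
    pose proof (sqrt_sqrt A ltac:(lra)). replace (sqrt A ^ 3) with (sqrt A * sqrt A * sqrt A) by ring. rewrite H0. reflexivity.
Qed.

Lemma pc_coef_derive t x : 0 < t < delta -> Rabs x < delta ->
  let A := a t x in let B := b t x in let ap := Fa 0%nat 1%nat t x in let bp := Fb 0%nat 1%nat t x in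
  is_derive (fun y => -(3 + 2 * a t y + a t y ^ 2)) x (-(2+2*A)*ap) /\
  is_derive (fun y => 6*a t y + 2*a t y^2 + 2*a t y^3 - 9*b t y^2) x ((6+4*A+6*A^2)*ap - 18*B*bp) /\
  is_derive (fun y => -(4*a t y^3 - 27*b t y^2)) x (-(12*A^2*ap - 54*B*bp)).
Proof.
  intros Ht Hx A B ap bp.
  destruct (region_facts t x Ht Hx) as [T1 [X1 _]].
  assert (HA : is_derive (fun y => a t y) x ap) by (apply a_derive; lra).
  assert (HB : is_derive (fun y => b t y) x bp) by (apply b_derive; lra).
  split; [|split]; auto_derive; try (repeat split; eexists; eassumption);
    erewrite (Derive_of _ x) by exact HA; try erewrite (Derive_of _ x) by exact HB; unfold A, B; ring.
Qed.

Lemma a_stable t x : 0 < t < delta -> Rabs x < delta ->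
  exists r0, 0 < r0 /\ forall y, Rabs (y - x) < r0 -> Rabs y < delta /\ Rabs (a t y - a t x) <= a t x / 4.
Proof.
  intros Ht Hx. destruct (region_facts t x Ht Hx) as [T1 [X1 [_ [P1 _]]]].
  assert (d2 : delta <= r) by (eapply Rle_trans; [apply Rmin_r| apply Rmin_l]).
  pose proof (Rabs_pos M01) as PM.
  exists (Rmin (delta - Rabs x) (a t x / (4 * (Rabs M01 + 1)))). split.
  { apply Rmin_pos; [lra| apply Rdiv_lt_0_compat; lra]. }
  intros y Hy.
  assert (Hy1 : Rabs (y - x) < delta - Rabs x) by (eapply Rlt_le_trans; [exact Hy| apply Rmin_l]).
  assert (Hy2 : Rabs (y - x) < a t x / (4 * (Rabs M01 + 1))) by (eapply Rlt_le_trans; [exact Hy| apply Rmin_r]).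
  assert (Hyd : Rabs y < delta) by (pose proof (Rabs_triang (y - x) x); replace (y - x + x) with y in H by ring; lra).
  split; auto.
  assert (seg : forall z, Rmin x y <= z <= Rmax x y -> Rabs z < delta).
  { intros z Hz. unfold Rmin, Rmax in Hz. destruct (proj1 (Rabs_le_between x (Rabs x)) (Rle_refl _)).
    destruct (proj1 (Rabs_le_between y (Rabs y)) (Rle_refl _)).
    destruct (Rle_dec x y); apply Rabs_def1; lra. }
  assert (B : Rabs (a t y - a t x) <= Rabs M01 * Rabs (y - x)).
  { apply (mvt_bound (fun z => a t z) (fun z => Fa 0%nat 1%nat t z)).
    - intros z Hz. apply a_derive; [lra| pose proof (seg z Hz); lra].
    - intros z Hz. eapply Rle_trans; [apply HM01| apply Rle_abs]. apply dom_near_axis; [lra| pose proof (seg z Hz); lra]. }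
  eapply Rle_trans; [exact B|].
  apply Rle_trans with (Rabs M01 * (a t x / (4 * (Rabs M01 + 1)))).
  - apply Rmult_le_compat_l; lra.
  - apply (Rmult_le_reg_r (4 * (Rabs M01 + 1))); [lra|]. field_simplify; [|lra]. nra.
Qed.

Lemma scale_facts t x : 0 < t < delta -> Rabs x < delta ->
  let A := a t x in let s := sqrt A in
  0 < s <= 1/10 /\ A = s^2 /\ Rabs (Fa 0%nat 1%nat t x) <= Ka * s /\ Rabs (Fb 0%nat 1%nat t x) <= KB * s^2 /\
  Rabs (b t x) <= s^3.
Proof.
  intros Ht Hx A s. destruct (region_facts t x Ht Hx) as [T1 [X1 [_ [P1 [P2 [P3 _]]]]]].
  assert (As : A = s^2) by (unfold s; rewrite pow2_sqrt; unfold A; lra).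
  assert (s0 : 0 < s) by (unfold s; apply sqrt_lt_R0; unfold A; lra).
  split; [split; auto|]. 
  { unfold s. rewrite <- (sqrt_pow2 (1/10)) by lra. apply sqrt_le_1; unfold A; lra. }
  split; auto. split; [apply a_x_bound; auto|]. split.
  - rewrite <- As. apply b_x_bound; auto.
  - apply b_small; auto.
Qed.

Lemma eig_derive (l m2 m3 : R -> R -> R) t x r0 : 0 < t < delta -> Rabs x < delta -> 0 < r0 ->
  (forall y, Rabs (y - x) < r0 ->
     (forall L, pc (a t y) (b t y) L = (L - l t y) * (L - m2 t y) * (L - m3 t y)) /\
     a t x / 4 <= Rabs (l t x - m2 t y) /\ a t x / 4 <= Rabs (l t x - m3 t y)) ->
  is_derive (fun y => l t y) x
    (- numl (a t x) (Fa 0%nat 1%nat t x) (b t x) (Fb 0%nat 1%nat t x) (l t x) / ((l t x - m2 t x) * (l t x - m3 t x))).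
Proof.
  intros Ht Hx Hr0 Hnear.
  destruct (region_facts t x Ht Hx) as [_ [_ [_ [P1 _]]]].
  destruct (pc_coef_derive t x Ht Hx) as [C2 [C1 C0]].
  apply (simple_root_derive (fun y => -(3 + 2 * a t y + a t y ^ 2)) (fun y => 6*a t y + 2*a t y^2 + 2*a t y^3 - 9*b t y^2)
           (fun y => -(4*a t y^3 - 27*b t y^2)) (fun y => l t y) (fun y => m2 t y) (fun y => m3 t y) x r0 (a t x / 4));
    auto; try lra.
  - intros y Hy L. rewrite <- pc_eq. apply Hnear, Hy.
  - intros y Hy. apply Hnear, Hy.
Qed.

Lemma eig_derive_bound l1 l2 l3 t x : eigen_ordered l1 l2 l3 -> 0 < t < delta -> Rabs x < delta ->
  let s := sqrt (a t x) in
  (ex_derive (fun y => l1 t y) x /\ Rabs (Derive (fun y => l1 t y) x) <= KL * s) /\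
  (ex_derive (fun y => l2 t y) x /\ Rabs (Derive (fun y => l2 t y) x) <= KL * s) /\
  (ex_derive (fun y => l3 t y) x /\ Rabs (Derive (fun y => l3 t y) x) <= KL * s).
Proof.
  intros H Ht Hx s.
  destruct (region_facts t x Ht Hx) as [T1 [X1 [_ [P1 [P2 [P3 _]]]]]].
  destruct (a_stable t x Ht Hx) as [r0 [Hr0 Hnear]].
  destruct (eig_facts l1 l2 l3 t x H Ht Hx) as [_ [_ [_ [_ [B1 [B2 B3]]]]]].
  destruct (scale_facts t x Ht Hx) as [S1 [S2 [S3 [S4 S5]]]]. fold s in S1, S2, S3, S4, S5.
  pose proof Ka_pos. pose proof KB_pos.
  (* near x the eigenvalues stay in their windows, computed with a t y in [3A/4, 5A/4] *)
  assert (Gy : forall y, Rabs (y - x) < r0 ->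
    (forall L, pc (a t y) (b t y) L = (L - l1 t y) * (L - l2 t y) * (L - l3 t y)) /\
    (0 <= l1 t y < a t y / 2) /\ (a t y < l2 t y < 3 * a t y) /\ (2 < l3 t y < 4) /\ 3 * a t x / 4 <= a t y <= 5 * a t x / 4).
  { intros y Hy. destruct (Hnear y Hy) as [Hyd Ha].
    destruct (eig_facts l1 l2 l3 t y H Ht Hyd) as [E1 [E2 [E3 [Hl [G1 [G2 G3]]]]]].
    destruct (proj1 (Rabs_le_between _ _) Ha).
    split; [apply pc_factor; auto|]. repeat split; try lra. }
  assert (D1 : is_derive (fun y => l1 t y) x
    (- numl (a t x) (Fa 0%nat 1%nat t x) (b t x) (Fb 0%nat 1%nat t x) (l1 t x) / ((l1 t x - l2 t x) * (l1 t x - l3 t x)))).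
  { apply (eig_derive l1 l2 l3 t x r0); auto. intros y Hy. destruct (Gy y Hy) as [F [G1 [G2 [G3 G4]]]].
    split; [exact F|]. rewrite !Rabs_left by lra. split; lra. }
  assert (D2 : is_derive (fun y => l2 t y) x
    (- numl (a t x) (Fa 0%nat 1%nat t x) (b t x) (Fb 0%nat 1%nat t x) (l2 t x) / ((l2 t x - l1 t x) * (l2 t x - l3 t x)))).
  { apply (eig_derive l2 l1 l3 t x r0); auto. intros y Hy. destruct (Gy y Hy) as [F [G1 [G2 [G3 G4]]]].
    split; [intro L; rewrite F; ring|]. rewrite Rabs_pos_eq, Rabs_left by lra. split; lra. }
  assert (D3 : is_derive (fun y => l3 t y) x
    (- numl (a t x) (Fa 0%nat 1%nat t x) (b t x) (Fb 0%nat 1%nat t x) (l3 t x) / ((l3 t x - l1 t x) * (l3 t x - l2 t x)))).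
  { apply (eig_derive l3 l1 l2 t x r0); auto. intros y Hy. destruct (Gy y Hy) as [F [G1 [G2 [G3 G4]]]].
    split; [intro L; rewrite F; ring|]. rewrite !Rabs_pos_eq by lra. split; lra. }
  unfold KL.
  split; [|split]; (split; [eexists; eassumption|]).
  - erewrite (Derive_of _ x) by exact D1.
    apply lder_small; auto; [rewrite Rabs_pos_eq | rewrite Rabs_left | rewrite Rabs_left]; lra.
  - erewrite (Derive_of _ x) by exact D2.
    apply lder_small; auto; [rewrite Rabs_pos_eq | rewrite Rabs_pos_eq | rewrite Rabs_left]; lra.
  - erewrite (Derive_of _ x) by exact D3.
    apply lder_big; auto; [rewrite Rabs_pos_eq | rewrite Rabs_pos_eq | rewrite Rabs_pos_eq]; lra.
Qed.

(* The index family for scaled orders: all admissible choices of ordered eigenvalues and of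
   a point of U /\ {t > 0}, with base point XI i = x and scale sI i = sqrt (a t x). *)
Definition good_index (p : Idx) : Prop :=
  eigen_ordered (il1 p) (il2 p) (il3 p) /\ 0 < it p < delta /\ Rabs (ix p) < delta.
Definition Index : Type := {p : Idx | good_index p}.
Definition XI (i : Index) : R := ix (proj1_sig i).
Definition TI (i : Index) : R := it (proj1_sig i).
Definition L1 (i : Index) : R -> R -> R := il1 (proj1_sig i).
Definition L2 (i : Index) : R -> R -> R := il2 (proj1_sig i).
Definition L3 (i : Index) : R -> R -> R := il3 (proj1_sig i).
Definition sI (i : Index) : R := sqrt (a (TI i) (XI i)).

Lemma good_index_spec (i : Index) : eigen_ordered (L1 i) (L2 i) (L3 i) /\ 0 < TI i < delta /\ Rabs (XI i) < delta.
Proof. exact (proj2_sig i). Qed.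

Lemma sI_range i : 0 < sI i <= 1.
Proof. destruct (good_index_spec i) as [H [Ht Hx]]. destruct (scale_facts _ _ Ht Hx) as [S1 _]. unfold sI. lra. Qed.

Definition aI (i : Index) (y : R) : R := a (TI i) y.
Definition bI (i : Index) (y : R) : R := b (TI i) y.
Definition l1I (i : Index) (y : R) : R := L1 i (TI i) y.
Definition l2I (i : Index) (y : R) : R := L2 i (TI i) y.
Definition l3I (i : Index) (y : R) : R := L3 i (TI i) y.

(* a = s^2 and b have orders 2 and 3: Glaeser and the cusp bound. *)
Lemma order_a : of_order XI sI 2 aI.
Proof.
  exists (1 + Ka). intros i. destruct (good_index_spec i) as [H [Ht Hx]].
  destruct (scale_facts _ _ Ht Hx) as [S1 [S2 [S3 [S4 S5]]]]. fold (sI i) in *.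
  destruct (region_facts _ _ Ht Hx) as [T1 [X1 [_ [P1 _]]]].
  assert (D : is_derive (aI i) (XI i) (Fa 0%nat 1%nat (TI i) (XI i))) by (apply a_derive; lra).
  pose proof Ka_pos. pose proof (pow_lt (sI i) 2 ltac:(lra)).
  split; [eexists; exact D|]. rewrite (Derive_of _ _ _ D). unfold aI. split.
  - rewrite Rabs_pos_eq by lra. rewrite S2. nra.
  - apply Rle_trans with (sI i * (Ka * sI i)). apply Rmult_le_compat_l; lra. simpl. nra.
Qed.

Lemma order_b : of_order XI sI 3 bI.
Proof.
  exists (1 + KB). intros i. destruct (good_index_spec i) as [H [Ht Hx]].
  destruct (scale_facts _ _ Ht Hx) as [S1 [S2 [S3 [S4 S5]]]]. fold (sI i) in *.
  destruct (region_facts _ _ Ht Hx) as [T1 [X1 [_ [P1 _]]]].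
  assert (D : is_derive (bI i) (XI i) (Fb 0%nat 1%nat (TI i) (XI i))) by (apply b_derive; lra).
  pose proof KB_pos. pose proof (pow_lt (sI i) 3 ltac:(lra)).
  split; [eexists; exact D|]. rewrite (Derive_of _ _ _ D). unfold bI. split.
  - nra.
  - apply Rle_trans with (sI i * (KB * sI i ^ 2)). apply Rmult_le_compat_l; lra. simpl. nra.
Qed.

Lemma order_eigs : of_order XI sI 2 l1I /\ of_order XI sI 2 l2I /\ of_order XI sI 0 l3I.
Proof.
  pose proof KL_pos.
  split; [|split]; [exists (3 + KL)|exists (3 + KL)|exists (4 + KL)]; intros i; destruct (good_index_spec i) as [HH [Ht Hx]];
  destruct (scale_facts _ _ Ht Hx) as [S1 [S2 [S3 [S4 S5]]]]; fold (sI i) in *;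
  destruct (eig_facts _ _ _ _ _ HH Ht Hx) as [_ [_ [_ [_ [B1 [B2 B3]]]]]];
  destruct (eig_derive_bound _ _ _ _ _ HH Ht Hx) as [[E1 D1] [[E2 D2] [E3 D3]]]; fold (sI i) in *;
  pose proof (pow_lt (sI i) 2 ltac:(lra)); rewrite <- S2 in *; unfold l1I, l2I, l3I.
  - split; auto. split.
    + rewrite Rabs_pos_eq by lra. nra.
    + apply Rle_trans with (sI i * (KL * sI i)). apply Rmult_le_compat_l; lra. rewrite S2. simpl. nra.
  - split; auto. split.
    + rewrite Rabs_pos_eq by lra. nra.
    + apply Rle_trans with (sI i * (KL * sI i)). apply Rmult_le_compat_l; lra. rewrite S2. simpl. nra.
  - split; auto. split.
    + rewrite Rabs_pos_eq by lra. simpl. lra.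
    + apply Rle_trans with (sI i * (KL * sI i)). apply Rmult_le_compat_l; lra. simpl.
      assert (sI i * sI i <= 1) by (apply Rle_trans with (sI i * 1); [apply Rmult_le_compat_l; lra| lra]).
      replace (sI i * (KL * sI i)) with (KL * (sI i * sI i)) by ring.
      assert (KL * (sI i * sI i) <= KL * 1) by (apply Rmult_le_compat_l; lra). lra.
Qed.

Ltac order_base := first [ exact order_a | exact order_b | exact (proj1 order_eigs)
  | exact (proj1 (proj2 order_eigs)) | exact (proj2 (proj2 order_eigs)) ].
Ltac order_auto := eapply (order_weak XI sI sI_range); [| repeat (first [ order_base | order_step | apply sI_range ])];
  simpl; lia.

Definition colI (j : nat) (i : Index) (y : R) : Vec := eigvec (aI i y) (bI i y) (l1I i y) (l2I i y) (l3I i y) j.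

Definition ordE (j p : nat) : nat :=
  match j, p with
  | 0, 0 => 4 | 0, 1 => 3 | 0, _ => 2
  | 1, 0 => 5 | 1, 1 => 2 | 1, _ => 3
  | _, 0 => 0 | _, 1 => 5 | _, _ => 2 end.
Definition normE (j : nat) : nat := match j with 0 | 1 => 2 | _ => 0 end.
Definition lbE (j : nat) : R := match j with 0%nat => 9 | _ => 1 end.

Lemma order_col j p : (j < 3)%nat -> (p < 3)%nat -> of_order XI sI (ordE j p) (fun i y => colI j i y p).
Proof.
  intros Hj Hp. unfold colI.
  destruct j as [|[|[|j]]]; try lia; destruct p as [|[|[|p]]]; try lia;
    unfold eigvec, ell1, ell2, ell3, mkv; simpl; order_auto.
  Unshelve. all: apply sI_range.
Qed.

Lemma col_lb j i : (j < 3)%nat -> lbE j * sI i ^ (2 * normE j) <= sq3 (colI j i (XI i)).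
Proof.
  intros Hj. destruct (good_index_spec i) as [H [Ht Hx]].
  destruct (eig_facts _ _ _ _ _ H Ht Hx) as [_ [_ [_ [_ [B1 [B2 B3]]]]]].
  destruct (region_facts _ _ Ht Hx) as [_ [_ [_ [P1 [P2 [_ P3]]]]]].
  destruct (scale_facts _ _ Ht Hx) as [_ [S2 _]]. fold (sI i) in S2.
  replace (sI i ^ (2 * normE j)) with ((sI i ^ 2) ^ normE j) by (rewrite <- pow_mult; reflexivity).
  rewrite <- S2. unfold colI, aI, bI, l1I, l2I, l3I.
  destruct j as [|[|[|j]]]; try lia; simpl; rewrite ?Rmult_1_l, ?Rmult_1_r.
  - replace (a (TI i) (XI i) * a (TI i) (XI i)) with (a (TI i) (XI i) ^ 2) by ring. apply sq1_lb; auto; lra.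
  - replace (a (TI i) (XI i) * a (TI i) (XI i)) with (a (TI i) (XI i) ^ 2) by ring. apply sq2_lb; auto; lra.
  - apply sq3_lb; auto; lra.
Qed.

Definition ordT (p j : nat) : nat := ordE j p - normE j.

Lemma order_T p j : (p < 3)%nat -> (j < 3)%nat ->
  of_order XI sI (ordT p j) (fun i y => matT (aI i y) (bI i y) (l1I i y) (l2I i y) (l3I i y) p j).
Proof.
  intros Hp Hj.
  apply (order_ext_all XI sI _ (fun i y => normalize (colI j i y) p)); [intros; rewrite matT_eigvec; auto|].
  apply (order_normalize XI sI sI_range _ (ordE j) (normE j) (lbE j)); auto.
  - destruct j as [|[|[|j]]]; try lia; simpl; lra.
  - intros q Hq. split; [|apply order_col; auto].
    destruct j as [|[|[|j]]]; try lia; destruct q as [|[|[|q]]]; try lia; simpl; lia.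
  - intros i. apply col_lb; auto.
Qed.

Lemma calA_loc (i : Index) (p q : nat) : (p < 3)%nat -> (q < 3)%nat -> locally (XI i) (fun y =>
  calA_entries (aI i y) (bI i y) (matT (aI i y) (bI i y) (l1I i y) (l2I i y) (l3I i y)) p q
  = calA (aI i y) (bI i y) (l1I i y) (l2I i y) (l3I i y) p q).
Proof.
  intros Hp Hq. destruct (good_index_spec i) as [H [Ht Hx]].
  eapply loc_impl; [apply (loc_abs (XI i) delta Hx)|]. intros y Hy.
  destruct (eig_facts _ _ _ _ _ H Ht Hy) as [E1 [E2 [E3 [Hl [B1 [B2 B3]]]]]].
  destruct (region_facts _ _ Ht Hy) as [_ [_ [_ [P1 [P2 [_ P3]]]]]].
  symmetry. apply calA_eq; auto. intros j Hj.
  assert (0 < a (TI i) y ^ 2) by (apply pow_lt; lra).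
  unfold aI, bI, l1I, l2I, l3I. destruct j as [|[|[|j]]]; try lia; simpl.
  - pose proof (sq1_lb (a (TI i) y) (b (TI i) y) ltac:(lra) P3 _ B1). lra.
  - pose proof (sq2_lb (a (TI i) y) (b (TI i) y) ltac:(lra) P3 _ B2). lra.
  - pose proof (sq3_lb (a (TI i) y) (b (TI i) y) ltac:(lra) P3 _ B3). lra.
Qed.

Definition ordA (p q : nat) : nat :=
  Nat.min (Nat.min (ordT 0 p + Nat.min (2 + ordT 1 q) (3 + ordT 2 q)) (ordT 1 p + ordT 0 q))
          (ordT 2 p + ordT 1 q).

Lemma order_calA p q : (p < 3)%nat -> (q < 3)%nat ->
  of_order XI sI (ordA p q) (fun i y => calA (aI i y) (bI i y) (l1I i y) (l2I i y) (l3I i y) p q).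
Proof.
  intros Hp Hq. apply (order_ext XI sI _ _ _ (fun i => calA_loc i p q Hp Hq)).
  unfold calA_entries, ordA.
  pose proof (order_T 0 p ltac:(lia) Hp). pose proof (order_T 1 p ltac:(lia) Hp).
  pose proof (order_T 2 p ltac:(lia) Hp). pose proof (order_T 0 q ltac:(lia) Hq).
  pose proof (order_T 1 q ltac:(lia) Hq). pose proof (order_T 2 q ltac:(lia) Hq).
  pose proof order_a. pose proof order_b.
  apply (order_add' XI sI sI_range); [apply (order_add' XI sI sI_range)|]; apply (order_mul XI sI sI_range); auto.
  apply (order_add' XI sI sI_range); apply (order_mul XI sI sI_range); auto.
Qed.

Lemma gauge_dominates A p q : 0 < A <= 1 -> (p < 3)%nat -> (q < 3)%nat ->
  sqrt A ^ ordA p q <= gaugeA A p q /\ sqrt A ^ ordA p q <= sqrt A * gaugedA A p q.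
Proof.
  intros HA Hp Hq.
  assert (Hs : 0 < sqrt A <= 1) by (split; [apply sqrt_lt_R0; lra | rewrite <- sqrt_1; apply sqrt_le_1; lra]).
  assert (EA : A = sqrt A * sqrt A) by (rewrite sqrt_sqrt; lra).
  unfold gaugeA, gaugedA. set (s := sqrt A) in *. rewrite EA. clearbody s.
  assert (0 < s * s) by nra. assert (s * s <= 1) by nra.
  assert (0 < s * s * s) by nra. assert (s * s * s <= 1) by nra.
  destruct p as [|[|[|p]]]; try lia; destruct q as [|[|[|q]]]; try lia; vm_compute ordA; simpl;
    try (rewrite Rinv_r by lra); nra.
Qed.

Lemma scaled_to_gauge k (s v D K C g dg : R) : 0 < s <= 1 -> 0 <= K <= C -> Rabs v <= K * s ^ k ->
  s * Rabs D <= K * s ^ k -> s ^ k <= g -> s ^ k <= s * dg -> Rabs v <= C * g /\ Rabs D <= C * dg.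
Proof.
  intros Hs HK Hv HD0 Hg Hdg. pose proof (pow_lt s k ltac:(lra)) as P.
  split.
  - eapply Rle_trans; [exact Hv|]. apply Rmult_le_compat; lra.
  - assert (s * Rabs D <= s * (C * dg)).
    { eapply Rle_trans; [exact HD0|]. apply Rle_trans with (K * (s * dg)); [apply Rmult_le_compat_l; lra|].
      replace (s * (C * dg)) with (C * (s * dg)) by ring. apply Rmult_le_compat_r; lra. }
    apply (Rmult_le_reg_l s); lra.
Qed.

Lemma final_main : exists delta C, 0 < delta /\ 0 < C /\
    (forall t x, 0 < t < delta -> Rabs x < delta ->
       exists m1 m2 m3, m1 < m2 < m3 /\
         is_eigenvalue (matS (a t x) (b t x)) m1 /\
         is_eigenvalue (matS (a t x) (b t x)) m2 /\
         is_eigenvalue (matS (a t x) (b t x)) m3) /\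
    (forall l1 l2 l3 : R -> R -> R,
       (forall t x, 0 < t < delta -> Rabs x < delta ->
          l1 t x < l2 t x < l3 t x /\
          is_eigenvalue (matS (a t x) (b t x)) (l1 t x) /\
          is_eigenvalue (matS (a t x) (b t x)) (l2 t x) /\
          is_eigenvalue (matS (a t x) (b t x)) (l3 t x)) ->
       forall t x, 0 < t < delta -> Rabs x < delta ->
       forall i j : nat, (i < 3)%nat -> (j < 3)%nat ->
         Rabs (calA (a t x) (b t x) (l1 t x) (l2 t x) (l3 t x) i j)
           <= C * gaugeA (a t x) i j /\
         ex_derive (fun y => calA (a t y) (b t y) (l1 t y) (l2 t y) (l3 t y) i j) x /\
         Rabs (Derive (fun y => calA (a t y) (b t y) (l1 t y) (l2 t y) (l3 t y) i j) x)
           <= C * gaugedA (a t x) i j).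
Proof.
  destruct (uniform_order_bound XI sI sI_range ordA
    (fun p q i y => calA (aI i y) (bI i y) (l1I i y) (l2I i y) (l3I i y) p q) order_calA) as [K [HK0 HK]].
  exists delta, (K + 1). split; [apply delta_pos|]. split; [lra|]. split.
  - intros t x Ht Hx. destruct (region_facts t x Ht Hx) as [_ [_ [_ [P1 [P2 [_ P3]]]]]].
    apply three_eigenvalues; auto.
  - intros l1 l2 l3 Hl t x Ht Hx p q Hp Hq.
    set (idx := exist good_index (mkIdx l1 l2 l3 t x) (conj Hl (conj Ht Hx)) : Index).
    destruct (HK p q Hp Hq idx) as [E [V W]].
    pose proof (sI_range idx) as Hs.
    destruct (region_facts t x Ht Hx) as [_ [_ [_ [P1 [P2 _]]]]].
    change (sI idx) with (sqrt (a t x)) in *.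
    destruct (gauge_dominates (a t x) p q ltac:(lra) Hp Hq) as [G1 G2].
    destruct (scaled_to_gauge (ordA p q) (sqrt (a t x)) _ _ K (K + 1) _ _ Hs ltac:(lra) V W G1 G2).
    auto.
Qed.

End Setting.

Theorem lemma3p2 (a b : R -> R -> R) (c Tt : R) (w1 w2 : Rbar) :
  0 < c -> 0 < Tt -> Rbar_lt w1 0 -> Rbar_lt 0 w2 ->
  smooth_bdd (fun t x => -c < t < Tt /\ Rbar_lt w1 x /\ Rbar_lt x w2) a ->
  smooth_bdd (fun t x => -c < t < Tt /\ Rbar_lt w1 x /\ Rbar_lt x w2) b ->
  (forall t x : R, 0 <= t < Tt -> Rbar_lt w1 x -> Rbar_lt x w2 ->
     0 <= 4 * a t x ^ 3 - 27 * b t x ^ 2) ->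
  a 0 0 = 0 ->
  (forall t x : R, 0 < t < Tt -> Rbar_lt w1 x -> Rbar_lt x w2 -> 0 < a t x) ->
  exists delta C : R, 0 < delta /\ 0 < C /\
    (* on U /\ {t>0}, U = (-delta,delta)^2, S has three distinct eigenvalues *)
    (forall t x, 0 < t < delta -> Rabs x < delta ->
       exists m1 m2 m3, m1 < m2 < m3 /\
         is_eigenvalue (matS (a t x) (b t x)) m1 /\
         is_eigenvalue (matS (a t x) (b t x)) m2 /\
         is_eigenvalue (matS (a t x) (b t x)) m3) /\
    (* for the ordered eigenvalues lambda_1 < lambda_2 < lambda_3 on U /\ {t>0} *)
    (forall l1 l2 l3 : R -> R -> R,
       (forall t x, 0 < t < delta -> Rabs x < delta ->
          l1 t x < l2 t x < l3 t x /\
          is_eigenvalue (matS (a t x) (b t x)) (l1 t x) /\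
          is_eigenvalue (matS (a t x) (b t x)) (l2 t x) /\
          is_eigenvalue (matS (a t x) (b t x)) (l3 t x)) ->
       forall t x, 0 < t < delta -> Rabs x < delta ->
       forall i j : nat, (i < 3)%nat -> (j < 3)%nat ->
         Rabs (calA (a t x) (b t x) (l1 t x) (l2 t x) (l3 t x) i j)
           <= C * gaugeA (a t x) i j /\
         ex_derive (fun y => calA (a t y) (b t y) (l1 t y) (l2 t y) (l3 t y) i j) x /\
         Rabs (Derive (fun y => calA (a t y) (b t y) (l1 t y) (l2 t y) (l3 t y) i j) x)
           <= C * gaugedA (a t x) i j).
Proof.
  intros Hc HT Hw1 Hw2 Sa Sb HD Ha00 Hpos.
  destruct Sa as [Fa [Fa0 [Fad Fab]]]. destruct Sb as [Fb [Fb0 [Fbd Fbb]]].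
  destruct (Fab 0%nat 1%nat) as [M01 HM01]. destruct (Fab 0%nat 2%nat) as [M02 HM02].
  destruct (Fab 1%nat 0%nat) as [M10 HM10]. destruct (Fbb 0%nat 3%nat) as [N03 HN03].
  destruct (rbar_rad w1 w2 Hw1 Hw2) as [r [Hr Hrw]].
  exact (final_main a b c Tt w1 w2 Fa Fb r M01 M02 M10 N03 Hc HT Fa0 Fad Fb0 Fbd Hr Hrw HM01 HM02 HM10 HN03 HD Ha00 Hpos).
Qed.
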